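(* Let $P$ be a rectangle with horizontal sides of length $w$ and vertical sides of length $1$ (aspect ratio $w$). Its two ping-pong cylinders are $\lambda$-stable. These are the only $\lambda$-stable periodic cylinders unless $$w=\frac{p}{q}\cot\left(\frac{\pi p}{2(p+q)}\right)$$ for some positive integers $p,q$. When $w$ satisfies this equation, there are, in addition to the ping-pong cylinders, at most two more $\lambda$-stable periodic cylinders, and their slopes are $\pm p/(qw)$.
   Context: For a polygon $P$, let $\Phi$ be its billiard map (collision to collision, specular reflection), in coordinates $(s,\theta)$ with $s$ arc length on $\partial P$ and $\theta\in(-\pi/2,\pi/2)$ the angle from the inward normal. For $\lambda>0$ let $R_\lambda(s,\theta)=(s,\lambda\theta)$ and $\Phi_\lambda:=R_\lambda\circ\Phi$. A periodic cylinder is a maximal one-parameter family of parallel periodic orbits of $\Phi$ with the same itinerary (sequence of sides hit). A ping-pong cylinder consists of orbits bouncing perpendicularly between two parallel sides. A periodic orbit $q$ of $\Phi$ is $\lambda^{+}$-stable (resp. $\lambda^-$-stable) if there exist a strictly decreasing (resp. strictly increasing) sequence $\lambda_n\to1$ and periodic orbits $q_n$ of $\Phi_{\lambda_n}$ with the same itinerary as $q$ such that $q_n\to q$. A periodic cylinder is $\lambda$-stable if it contains a $\lambda^+$-stable periodic orbit and a $\lambda^-$-stable periodic orbit. The slope of a cylinder is the slope of the (unfolded) straight lines of its trajectories. *)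

From Stdlib Require Import Reals Lra.
Open Scope R_scope.

(** Boundary parametrised by arc length s,
    counterclockwise from the corner (0,0):
      side 0 (bottom) : 0     < s < w
      side 1 (right)  : w     < s < w+1
      side 2 (top)    : w+1   < s < 2w+1
      side 3 (left)   : 2w+1  < s < 2w+2
    Corners are excluded (the billiard map is not defined there). *)

Definition cot (x : R) : R := cos x / sin x.

Definition on_side (w : R) (i : nat) (s : R) : Prop :=
  match i with
  | 0%nat => 0 < s < w
  | 1%nat => w < s < w + 1
  | 2%nat => w + 1 < s < 2 * w + 1
  | 3%nat => 2 * w + 1 < s < 2 * w + 2
  | _ => False
  end.

Definition bpos (w s : R) : R * R :=
  if Rle_dec s w then (s, 0)
  else if Rle_dec s (w + 1) then (w, s - w)
  else if Rle_dec s (2 * w + 1) then (2 * w + 1 - s, 1)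
  else (0, 2 * w + 2 - s).

Definition normal (i : nat) : R * R :=
  match i with
  | 0%nat => (0, 1)
  | 1%nat => (-1, 0)
  | 2%nat => (0, -1)
  | _ => (1, 0)
  end.

(** Unit direction making angle th with the inward normal of side i
    (th > 0 = counterclockwise rotation of the normal). *)
Definition dir (i : nat) (th : R) : R * R :=
  (cos th * fst (normal i) - sin th * snd (normal i),
   sin th * fst (normal i) + cos th * snd (normal i)).

Definition vadd (a b : R * R) : R * R := (fst a + fst b, snd a + snd b).
Definition vscal (t : R) (a : R * R) : R * R := (t * fst a, t * snd a).
Definition vdot (a b : R * R) : R := fst a * fst b + snd a * snd b.

Definition reflect (d n : R * R) : R * R := vadd d (vscal (-2 * vdot d n) n).

Definition interior (w : R) (p : R * R) : Prop :=
  0 < fst p < w /\ 0 < snd p < 1.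

(** The billiard map Phi (collision to collision), as a (functional) relation
    on phase points (s, theta). *)
Definition Bill (w : R) (x y : R * R) : Prop :=
  exists (i j : nat) (t : R),
    on_side w i (fst x) /\ on_side w j (fst y) /\
    - (PI / 2) < snd x < PI / 2 /\ - (PI / 2) < snd y < PI / 2 /\
    0 < t /\
    bpos w (fst y) = vadd (bpos w (fst x)) (vscal t (dir i (snd x))) /\
    (forall tau, 0 < tau < t ->
       interior w (vadd (bpos w (fst x)) (vscal tau (dir i (snd x))))) /\
    dir j (snd y) = reflect (dir i (snd x)) (normal j).

(** Phi_lambda = R_lambda o Phi, with R_lambda (s,theta) = (s, lambda theta)
    (defined when the image stays in the phase space). *)
Definition PhiL (w lam : R) (x y : R * R) : Prop :=
  exists z, Bill w x z /\ y = (fst z, lam * snd z) /\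
            - (PI / 2) < lam * snd z < PI / 2.

Definition is_orbit (w : R) (F : R * R -> R * R -> Prop) (n : nat)
  (itin : nat -> nat) (q : nat -> R * R) : Prop :=
  (0 < n)%nat /\
  (forall k, (k < n)%nat -> F (q k) (q (S k))) /\
  q n = q 0%nat /\
  (forall k, (k < n)%nat -> on_side w (itin k) (fst (q k))).

Definition in_cyl (w : R) (n : nat) (itin : nat -> nat) (q : nat -> R * R) : Prop :=
  is_orbit w (Bill w) n itin q.

Definition is_cyl (w : R) (n : nat) (itin : nat -> nat) : Prop :=
  exists q, in_cyl w n itin q /\
            (forall k, (0 < k)%nat -> (k < n)%nat -> q k <> q 0%nat).

Definition lam_plus_stable (w : R) (n : nat) (itin : nat -> nat)
  (q : nat -> R * R) : Prop :=
  exists (lam : nat -> R) (qs : nat -> nat -> R * R),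
    (forall m, lam (S m) < lam m) /\ Un_cv lam 1 /\
    (forall m, is_orbit w (PhiL w (lam m)) n itin (qs m)) /\
    (forall k, (k < n)%nat ->
       Un_cv (fun m => fst (qs m k)) (fst (q k)) /\
       Un_cv (fun m => snd (qs m k)) (snd (q k))).

Definition lam_minus_stable (w : R) (n : nat) (itin : nat -> nat)
  (q : nat -> R * R) : Prop :=
  exists (lam : nat -> R) (qs : nat -> nat -> R * R),
    (forall m, 0 < lam m) /\
    (forall m, lam m < lam (S m)) /\ Un_cv lam 1 /\
    (forall m, is_orbit w (PhiL w (lam m)) n itin (qs m)) /\
    (forall k, (k < n)%nat ->
       Un_cv (fun m => fst (qs m k)) (fst (q k)) /\
       Un_cv (fun m => snd (qs m k)) (snd (q k))).

Definition lam_stable_cyl (w : R) (n : nat) (itin : nat -> nat) : Prop :=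
  is_cyl w n itin /\
  (exists q, in_cyl w n itin q /\ lam_plus_stable w n itin q) /\
  (exists q, in_cyl w n itin q /\ lam_minus_stable w n itin q).

(** Ping-pong cylinder: orbits bouncing perpendicularly between two
    parallel (opposite) sides. *)
Definition ping_pong (w : R) (n : nat) (itin : nat -> nat) : Prop :=
  n = 2%nat /\ itin 1%nat = ((itin 0%nat + 2) mod 4)%nat /\
  forall q, in_cyl w n itin q -> snd (q 0%nat) = 0 /\ snd (q 1%nat) = 0.

Definition cyl_set (w : R) (n : nat) (itin : nat -> nat) (x : R * R) : Prop :=
  exists q k, in_cyl w n itin q /\ (k < n)%nat /\ q k = x.

Definition cyl_abs_slope (w : R) (n : nat) (itin : nat -> nat) (r : R) : Prop :=
  forall q, in_cyl w n itin q -> forall k, (k < n)%nat ->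
    Rabs (snd (dir (itin k) (snd (q k)))) = r * Rabs (fst (dir (itin k) (snd (q k)))).

Definition special_width (w : R) (p q : nat) : Prop :=
  w = INR p / INR q * cot (PI * INR p / (2 * (INR p + INR q))).

(** A perturbed periodic orbit of [Phi_lambda] keeps its itinerary, and [R_lambda]
    rescales the angle with the normal at each collision, whereas a reflection
    preserves the angle [c] between the trajectory and the horizontal.  Summing the
    changes of this angle over a period and letting [lambda -> 1+] shows that the
    limit orbit satisfies [H (pi/2 - c) = V c], where [H] and [V] count its hits on
    the horizontal and on the vertical sides; closing the unfolded trajectory gives
    [w V tan c = H].  If [H] or [V] vanishes the cylinder is a ping-pong cylinder
    (whose orbits hit perpendicularly and are fixed by every [R_lambda], hence are
    [lambda]-stable); otherwise eliminating [c] gives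
    [w = (H/V) cot (pi H / (2 (H + V)))], and since [t cot t / (pi/2 - t)] is
    strictly increasing on [(0, pi/2)], [w] determines [H/V = p/q], hence the slope.

    For the count, [zeta = p (+-x)/w - q (+-y)], the signs following the direction
    of motion, is constant along a flight and jumps by a multiple of [2 gcd(p,q)] at
    a reflection; it is a multiple of [gcd(p,q)] at the corners.  Translating an orbit
    parallel to itself sweeps a whole open interval of values of [zeta] between two
    consecutive multiples of [gcd(p,q)] and, modulo [2 gcd(p,q)], every point of the
    phase space with that slope and a [zeta] in the same interval lies on the
    cylinder.  So the cylinders fall into two classes according to the parity of that
    interval, and two cylinders in the same class coincide. *)

From Pilot Require Import Defs.
From Stdlib Require Import Reals Lra Lia ZArith Classical.
From Coquelicot Require Coquelicot.
Open Scope R_scope.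

Lemma on_side_lt4 w i s : on_side w i s -> (i < 4)%nat.
Proof. destruct i as [|[|[|[|i]]]]; simpl; intros; try lia; contradiction. Qed.

Lemma on_side_unique w i j s : 0 < w -> on_side w i s -> on_side w j s -> i = j.
Proof.
  intros hw.
  destruct i as [|[|[|[|i]]]]; destruct j as [|[|[|[|j]]]]; simpl; intros; try lra; try contradiction; reflexivity.
Qed.

Definition on_edge (w : R) (i : nat) (P : R * R) : Prop :=
  match i with
  | 0%nat => snd P = 0 /\ 0 < fst P < w
  | 1%nat => fst P = w /\ 0 < snd P < 1
  | 2%nat => snd P = 1 /\ 0 < fst P < w
  | 3%nat => fst P = 0 /\ 0 < snd P < 1
  | _ => False
  end.

Definition arc_of (w : R) (i : nat) (P : R * R) : R :=
  match i with 0%nat => fst P | 1%nat => w + snd P | 2%nat => 2 * w + 1 - fst P | _ => 2 * w + 2 - snd P end.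

Lemma bposE w i s : 0 < w -> on_side w i s -> bpos w s =
  match i with
  | 0%nat => (s, 0)
  | 1%nat => (w, s - w)
  | 2%nat => (2 * w + 1 - s, 1)
  | _ => (0, 2 * w + 2 - s)
  end.
Proof.
  intros hw h; unfold bpos.
  destruct i as [|[|[|[|i]]]]; simpl in h; try contradiction;
  repeat (destruct (Rle_dec _ _); try lra); reflexivity.
Qed.

Lemma bpos_on_edge w i s : 0 < w -> on_side w i s -> on_edge w i (bpos w s).
Proof.
  intros hw h. rewrite (bposE w i) by auto.
  destruct i as [|[|[|[|i]]]]; simpl in *; try contradiction; lra.
Qed.

Lemma bpos_inj w i s s' : 0 < w -> on_side w i s -> on_side w i s' -> bpos w s = bpos w s' -> s = s'.
Proof.
  intros hw h h' e. rewrite (bposE w i s), (bposE w i s') in e by auto.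
  destruct i as [|[|[|[|i]]]]; simpl in *; try contradiction; injection e; lra.
Qed.

Lemma arc_ofP w i P : 0 < w -> on_edge w i P -> on_side w i (arc_of w i P) /\ bpos w (arc_of w i P) = P.
Proof.
  intros hw h.
  assert (hs : on_side w i (arc_of w i P)).
  { destruct i as [|[|[|[|i]]]]; simpl in *; try contradiction; lra. }
  split; auto. rewrite (bposE w i) by auto. destruct P as [X Y].
  destruct i as [|[|[|[|i]]]]; simpl in *; try contradiction; f_equal; lra.
Qed.

Lemma on_edge_lt4 w i P : on_edge w i P -> (i < 4)%nat.
Proof. destruct i as [|[|[|[|i]]]]; simpl; intros; try lia; contradiction. Qed.

Lemma on_edge_unique w i j P : 0 < w -> on_edge w i P -> on_edge w j P -> i = j.
Proof.
  intros hw. destruct P as [X Y].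
  destruct i as [|[|[|[|i]]]]; destruct j as [|[|[|[|j]]]]; simpl; intros; try lra; try contradiction; reflexivity.
Qed.

Lemma on_edge_not_interior w i P : on_edge w i P -> ~ Defs.interior w P.
Proof. unfold Defs.interior. destruct P as [X Y]; destruct i as [|[|[|[|i]]]]; simpl; intros; lra. Qed.

Lemma on_edge_rect w i P : 0 < w -> on_edge w i P -> 0 <= fst P <= w /\ 0 <= snd P <= 1.
Proof. intros hw; destruct P as [X Y]; destruct i as [|[|[|[|i]]]]; simpl; intros; try lra; contradiction. Qed.

Lemma cos_angle_pos th : - (PI/2) < th < PI/2 -> 0 < cos th.
Proof. intros h. apply cos_gt_0; lra. Qed.

Lemma dirE i th : (i < 4)%nat -> dir i th =
  match i with
  | 0%nat => (- sin th, cos th)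
  | 1%nat => (- cos th, - sin th)
  | 2%nat => (sin th, - cos th)
  | _ => (cos th, sin th)
  end.
Proof. intros h; destruct i as [|[|[|[|i]]]]; unfold dir; simpl; try (f_equal; ring); lia. Qed.

Lemma dir_0 i : dir i 0 = normal i.
Proof. unfold dir. rewrite sin_0, cos_0. destruct (normal i); simpl; f_equal; ring. Qed.

Lemma normal_opposite i j : (i < 4)%nat -> (j < 4)%nat -> vdot (normal i) (normal j) < 0 ->
  normal j = vscal (-1) (normal i) /\ j = ((i + 2) mod 4)%nat.
Proof.
  intros hi hj h. destruct i as [|[|[|[|i]]]]; destruct j as [|[|[|[|j]]]]; try lia;
  unfold vdot, vscal in *; simpl in *; try lra; split; auto; f_equal; ring.
Qed.

Lemma dir_unit i th : (i < 4)%nat -> fst (dir i th) ^ 2 + snd (dir i th) ^ 2 = 1.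
Proof.
  intros hi. rewrite dirE by auto. pose proof (sin2_cos2 th) as e; unfold Rsqr in e.
  destruct i as [|[|[|[|i]]]]; simpl; try lia; lra.
Qed.

Lemma dir_inj i th th' : (i < 4)%nat -> - (PI/2) < th < PI/2 -> - (PI/2) < th' < PI/2 ->
  dir i th = dir i th' -> th = th'.
Proof.
  intros hi h h' e. rewrite !dirE in e by auto.
  apply sin_inj; try lra.
  destruct i as [|[|[|[|i]]]]; injection e; intros; lra.
Qed.

Lemma vdot_dir_normal i th : (i < 4)%nat -> vdot (dir i th) (normal i) = cos th.
Proof. intros hi; rewrite dirE by auto; destruct i as [|[|[|[|i]]]]; unfold vdot; simpl; try ring; lia. Qed.

(** Reflection at a horizontal side (even index) flips the vertical component. *)
Definition mirror (j : nat) (D : R * R) : R * R :=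
  if Nat.even j then (fst D, - snd D) else (- fst D, snd D).

Lemma reflect_normal j D : (j < 4)%nat -> reflect D (normal j) = mirror j D.
Proof.
  intros h; destruct D as [a b]; destruct j as [|[|[|[|j]]]];
  unfold reflect, mirror, vadd, vscal, vdot; simpl; try (f_equal; ring); lia.
Qed.

Lemma vadd_scal0 P D : vadd P (vscal 0 D) = P.
Proof. destruct P, D; unfold vadd, vscal; simpl; f_equal; ring. Qed.

Record step (w : R) (x y : R * R) (i j : nat) (t : R) : Prop := {
  st_i : on_side w i (fst x);
  st_j : on_side w j (fst y);
  st_thx : - (PI / 2) < snd x < PI / 2;
  st_thy : - (PI / 2) < snd y < PI / 2;
  st_t : 0 < t;
  st_pos : bpos w (fst y) = vadd (bpos w (fst x)) (vscal t (dir i (snd x)));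
  st_int : forall tau, 0 < tau < t -> Defs.interior w (vadd (bpos w (fst x)) (vscal tau (dir i (snd x))));
  st_dir : dir j (snd y) = mirror j (dir i (snd x)) }.

Lemma Bill_step w x y : Bill w x y -> exists i j t, step w x y i j t.
Proof.
  intros (i & j & t & h1 & h2 & h3 & h4 & h5 & h6 & h7 & h8).
  exists i, j, t; constructor; auto; try lra.
  rewrite h8. apply reflect_normal. eapply on_side_lt4; eauto.
Qed.

Lemma step_Bill w x y i j t : step w x y i j t -> Bill w x y.
Proof.
  intros [h1 h2 h3 h4 h5 h6 h7 h8]. exists i, j, t.
  do 7 (split; [auto; lra|]).
  rewrite h8. symmetry; apply reflect_normal. eapply on_side_lt4; eauto.
Qed.

Section Step.
Variables (w : R) (x y : R * R) (i j : nat) (t : R).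
Hypothesis hw : 0 < w.
Hypothesis hs : step w x y i j t.

Lemma step_src_lt4 : (i < 4)%nat.
Proof. exact (on_side_lt4 _ _ _ (st_i _ _ _ _ _ _ hs)). Qed.

Lemma step_dst_lt4 : (j < 4)%nat.
Proof. exact (on_side_lt4 _ _ _ (st_j _ _ _ _ _ _ hs)). Qed.

Lemma step_src_edge : on_edge w i (bpos w (fst x)).
Proof. exact (bpos_on_edge _ _ _ hw (st_i _ _ _ _ _ _ hs)). Qed.

Lemma step_dst_edge : on_edge w j (bpos w (fst y)).
Proof. exact (bpos_on_edge _ _ _ hw (st_j _ _ _ _ _ _ hs)). Qed.

Lemma step_arrival : vdot (dir i (snd x)) (normal j) < 0.
Proof.
  pose proof step_src_edge as p1. pose proof step_dst_edge as p2.
  pose proof (cos_angle_pos _ (st_thx _ _ _ _ _ _ hs)) as hc.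
  pose proof step_src_lt4 as hi. pose proof step_dst_lt4 as hj.
  pose proof (st_t _ _ _ _ _ _ hs) as ht.
  rewrite (st_pos _ _ _ _ _ _ hs) in p2. revert p1 p2. rewrite (dirE i) by auto.
  destruct (bpos w (fst x)) as [X Y].
  unfold vdot, vadd, vscal; simpl.
  destruct i as [|[|[|[|i']]]]; destruct j as [|[|[|[|j']]]]; simpl; intros; try lia; try nra.
Qed.

Lemma step_arrival_sign :
  match j with
  | 0%nat => snd (dir i (snd x)) < 0
  | 1%nat => 0 < fst (dir i (snd x))
  | 2%nat => 0 < snd (dir i (snd x))
  | _ => fst (dir i (snd x)) < 0
  end.
Proof.
  pose proof step_arrival as h. pose proof step_dst_lt4 as hj.
  destruct (dir i (snd x)) as [a b]; unfold vdot in h; simpl in *.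
  destruct j as [|[|[|[|j']]]]; simpl in *; try lia; lra.
Qed.

Lemma step_sides_neq : i <> j.
Proof.
  intros e. pose proof step_arrival as h. rewrite <- e in h.
  rewrite vdot_dir_normal in h by exact step_src_lt4.
  pose proof (cos_angle_pos _ (st_thx _ _ _ _ _ _ hs)); lra.
Qed.

Lemma step_abs_components :
  Rabs (fst (dir j (snd y))) = Rabs (fst (dir i (snd x))) /\
  Rabs (snd (dir j (snd y))) = Rabs (snd (dir i (snd x))).
Proof.
  rewrite (st_dir _ _ _ _ _ _ hs). unfold mirror.
  destruct (Nat.even j); simpl; split; try rewrite Rabs_Ropp; auto.
Qed.

End Step.

Lemma step_det w x y y' i j t j' t' : 0 < w -> step w x y i j t -> step w x y' i j' t' -> y = y'.
Proof.
  intros hw hs hs'.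
  assert (tt : t = t').
  { destruct (Rtotal_order t t') as [l|[e|l]]; auto; exfalso.
    - pose proof (st_int _ _ _ _ _ _ hs' t (conj (st_t _ _ _ _ _ _ hs) l)) as hin.
      rewrite <- (st_pos _ _ _ _ _ _ hs) in hin.
      exact (on_edge_not_interior _ _ _ (step_dst_edge _ _ _ _ _ _ hw hs) hin).
    - pose proof (st_int _ _ _ _ _ _ hs t' (conj (st_t _ _ _ _ _ _ hs') l)) as hin.
      rewrite <- (st_pos _ _ _ _ _ _ hs') in hin.
      exact (on_edge_not_interior _ _ _ (step_dst_edge _ _ _ _ _ _ hw hs') hin). }
  subst t'.
  assert (ep : bpos w (fst y) = bpos w (fst y')) by (rewrite (st_pos _ _ _ _ _ _ hs), (st_pos _ _ _ _ _ _ hs'); auto).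
  assert (jj : j = j').
  { apply (on_edge_unique w _ _ _ hw (step_dst_edge _ _ _ _ _ _ hw hs)).
    rewrite ep. exact (step_dst_edge _ _ _ _ _ _ hw hs'). }
  subst j'.
  assert (es : fst y = fst y') by (eapply bpos_inj; eauto; [exact (st_j _ _ _ _ _ _ hs)|exact (st_j _ _ _ _ _ _ hs')]).
  assert (eth : snd y = snd y').
  { apply (dir_inj j); [exact (step_dst_lt4 _ _ _ _ _ _ hs)|exact (st_thy _ _ _ _ _ _ hs)|exact (st_thy _ _ _ _ _ _ hs')|].
    rewrite (st_dir _ _ _ _ _ _ hs), (st_dir _ _ _ _ _ _ hs'). auto. }
  destruct y, y'; simpl in *; subst; auto.
Qed.

Lemma Bill_det w x y y' : 0 < w -> Bill w x y -> Bill w x y' -> y = y'.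
Proof.
  intros hw h h'. apply Bill_step in h as (i & j & t & hs). apply Bill_step in h' as (i' & j' & t' & hs').
  assert (i = i') by (eapply on_side_unique; eauto; [exact (st_i _ _ _ _ _ _ hs)|exact (st_i _ _ _ _ _ _ hs')]).
  subst; eapply step_det; eauto.
Qed.

(** A chord between two different sides is a step: its interior lies inside the
    rectangle by convexity. *)
Lemma chord_interior w i j P Q lam : 0 < w -> on_edge w i P -> on_edge w j Q -> i <> j -> 0 < lam < 1 ->
  Defs.interior w (vadd P (vscal lam (vadd Q (vscal (-1) P)))).
Proof.
  intros hw hP hQ hij hl. destruct P as [X Y], Q as [X' Y']. unfold Defs.interior, vadd, vscal; simpl.
  destruct i as [|[|[|[|i]]]]; destruct j as [|[|[|[|j]]]]; simpl in *; try contradiction; try lia; nra.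
Qed.

Lemma chord_inward w i j P Q : 0 < w -> on_edge w i P -> on_edge w j Q -> i <> j ->
  0 < vdot (vadd Q (vscal (-1) P)) (normal i).
Proof.
  intros hw hP hQ hij. destruct P as [X Y], Q as [X' Y']. unfold vdot, vadd, vscal; simpl.
  destruct i as [|[|[|[|i]]]]; destruct j as [|[|[|[|j]]]]; simpl in *; try contradiction; try lia; lra.
Qed.

Lemma Bill_of_chord w x y i j lam : 0 < w -> on_side w i (fst x) -> on_side w j (fst y) -> i <> j ->
  - (PI/2) < snd x < PI/2 -> - (PI/2) < snd y < PI/2 ->
  bpos w (fst y) = vadd (bpos w (fst x)) (vscal lam (dir i (snd x))) ->
  dir j (snd y) = mirror j (dir i (snd x)) -> Bill w x y.
Proof.
  intros hw hi hj hij hx hy hp hd.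
  pose proof (bpos_on_edge _ _ _ hw hi) as pi. pose proof (bpos_on_edge _ _ _ hw hj) as pj.
  assert (hi4 : (i < 4)%nat) by (eapply on_side_lt4; eauto).
  set (P := bpos w (fst x)) in *. set (D := dir i (snd x)) in *.
  assert (hchord : vadd (bpos w (fst y)) (vscal (-1) P) = vscal lam D).
  { rewrite hp. unfold vadd, vscal; destruct P, D; simpl; f_equal; ring. }
  assert (hl : 0 < lam).
  { pose proof (chord_inward _ _ _ _ _ hw pi pj hij) as c. rewrite hchord in c.
    pose proof (vdot_dir_normal i (snd x) hi4) as e. pose proof (cos_angle_pos _ hx). fold D in e.
    unfold vdot, vscal in c, e; simpl in *. nra. }
  apply (step_Bill _ _ _ i j lam). constructor; auto.
  intros tau ht. pose proof (chord_interior _ _ _ _ _ (tau / lam) hw pi pj hij) as c.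
  rewrite hchord in c. change (Defs.interior w (vadd P (vscal tau D))).
  replace (vadd P (vscal tau D)) with (vadd P (vscal (tau / lam) (vscal lam D)))
    by (unfold vadd, vscal; destruct P, D; simpl; f_equal; field; lra).
  apply c. split. apply Rdiv_lt_0_compat; lra. apply (Rmult_lt_reg_r lam); auto. field_simplify; lra.
Qed.

Lemma Un_cv_const c : Un_cv (fun _ => c) c.
Proof. intros e he; exists 0%nat; intros; unfold Rdist; rewrite Rminus_diag, Rabs_R0; auto. Qed.

Lemma Un_cv_one_plus_inv : Un_cv (fun m => 1 + / (INR m + 1)) 1.
Proof.
  pose proof (CV_plus _ _ _ _ (Un_cv_const 1) RinvN_cv) as h.
  rewrite Rplus_0_r in h. exact h.
Qed.

Lemma Un_cv_one_minus_inv : Un_cv (fun m => 1 - / (INR (S m) + 1)) 1.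
Proof.
  pose proof (CV_minus _ _ _ _ (Un_cv_const 1) (CV_shift' (fun m => RinvN m) 1 0 RinvN_cv)) as h.
  rewrite Rminus_0_r in h. intros e he. destruct (h e he) as [N hN]. exists N. intros m hm.
  specialize (hN m hm). simpl in hN. rewrite <- S_INR, Nat.add_1_r in hN. exact hN.
Qed.

Lemma inv_succ_decr m : / (INR (S m) + 1) < / (INR m + 1).
Proof. rewrite S_INR. pose proof (pos_INR m). apply Rinv_lt_contravar; nra. Qed.

(** An orbit with all angles [0] is an orbit of every [Phi_lambda]. *)
Lemma lam_stable_of_perpendicular w n itin q : is_cyl w n itin -> in_cyl w n itin q ->
  (forall k, (k <= n)%nat -> snd (q k) = 0) -> lam_stable_cyl w n itin.
Proof.
  intros hc hq hz.
  assert (horb : forall l, 0 < l -> is_orbit w (PhiL w l) n itin q).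
  { intros l hl. destruct hq as (h1 & h2 & h3 & h4). repeat split; auto.
    intros k hk. exists (q (S k)). pose proof (h2 k hk) as hb. pose proof (hz (S k) ltac:(lia)) as e.
    destruct (q (S k)) as [a b]; simpl in *. subst b. rewrite Rmult_0_r.
    pose proof PI_RGT_0. repeat split; auto; lra. }
  assert (hconst : forall k, Un_cv (fun _ : nat => fst (q k)) (fst (q k)) /\
                             Un_cv (fun _ : nat => snd (q k)) (snd (q k)))
    by (intros; split; apply Un_cv_const).
  split; auto. split.
  - exists q; split; auto. exists (fun m => 1 + / (INR m + 1)), (fun _ => q).
    split; [|split; [apply Un_cv_one_plus_inv|split; auto]].
    + intros m. pose proof (inv_succ_decr m). lra.
    + intros m; apply horb. pose proof (RinvN_pos m). lra.
  - exists q; split; auto. exists (fun m => 1 - / (INR (S m) + 1)), (fun _ => q).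
    assert (hb : forall m, / (INR (S m) + 1) < 1).
    { intros m. rewrite S_INR. pose proof (pos_INR m). rewrite <- Rinv_1. apply Rinv_lt_contravar; lra. }
    split; [|split; [|split; [apply Un_cv_one_minus_inv|split; auto]]].
    + intros m; specialize (hb m); lra.
    + intros m. pose proof (inv_succ_decr (S m)). lra.
    + intros m; apply horb. specialize (hb m); lra.
Qed.

Lemma Bill_perpendicular w i j s s' len : 0 < w -> on_side w i s -> on_side w j s' -> i <> j ->
  bpos w s' = vadd (bpos w s) (vscal len (normal i)) -> normal j = vscal (-1) (normal i) ->
  Bill w (s, 0) (s', 0).
Proof.
  intros hw hi hj hij hp hn. pose proof (on_side_lt4 _ _ _ hi). pose proof (on_side_lt4 _ _ _ hj).
  pose proof PI_RGT_0.
  apply (Bill_of_chord w _ _ i j len); simpl; auto; try lra; rewrite !dir_0.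
  - exact hp.
  - rewrite hn. destruct i as [|[|[|[|i]]]]; destruct j as [|[|[|[|j]]]]; try lia;
    unfold mirror, vscal in *; simpl in *; injection hn; intros; f_equal; lra.
Qed.

Lemma lam_stable_pingpong w i j s s' len : 0 < w -> on_side w i s -> on_side w j s' -> i <> j ->
  bpos w s' = vadd (bpos w s) (vscal len (normal i)) -> normal j = vscal (-1) (normal i) ->
  lam_stable_cyl w 2 (fun k => if Nat.even k then i else j).
Proof.
  intros hw hi hj hij hp hn.
  set (q := fun k => if Nat.even k then (s, 0) else (s', 0)).
  assert (hq : in_cyl w 2 (fun k => if Nat.even k then i else j) q).
  { split; [lia|split; [|split]]; auto.
    - intros k hk. destruct k as [|[|k]]; simpl; try lia.
      + exact (Bill_perpendicular w i j s s' len hw hi hj hij hp hn).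
      + apply (Bill_perpendicular w j i s' s len); auto.
        * rewrite hp, hn. unfold vadd, vscal. destruct (bpos w s), (normal i); simpl; f_equal; ring.
        * rewrite hn. unfold vscal. destruct (normal i); simpl; f_equal; ring.
    - intros k hk. destruct k as [|[|k]]; simpl; auto; lia. }
  apply (lam_stable_of_perpendicular _ _ _ q); auto.
  - exists q; split; auto. intros k h1 h2. destruct k as [|[|k]]; try lia.
    unfold q; simpl. intros e; injection e; intros. subst s'. now apply hij, (on_side_unique w _ _ s).
  - intros k hk. unfold q. destruct (Nat.even k); reflexivity.
Qed.

Fixpoint sumR (f : nat -> R) (n : nat) : R :=
  match n with O => 0 | S m => sumR f m + f m end.

Lemma sumR_ext f g n : (forall k, (k < n)%nat -> f k = g k) -> sumR f n = sumR g n.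
Proof. induction n; simpl; intros h; auto. rewrite IHn by (intros; apply h; lia). rewrite h by lia; auto. Qed.

Lemma sumR_plus f g n : sumR (fun k => f k + g k) n = sumR f n + sumR g n.
Proof. induction n; simpl; [ring|rewrite IHn; ring]. Qed.

Lemma sumR_scal c f n : sumR (fun k => c * f k) n = c * sumR f n.
Proof. induction n; simpl; [ring|rewrite IHn; ring]. Qed.

Lemma sumR_telescope g n : sumR (fun k => g (S k) - g k) n = g n - g O.
Proof. induction n; simpl; [ring|rewrite IHn; ring]. Qed.

Lemma sumR_shift g n : sumR (fun k => g (S k)) n = sumR g n + g n - g O.
Proof. induction n; simpl; [ring|rewrite IHn; ring]. Qed.

Lemma sumR_nonneg f n : (forall k, (k < n)%nat -> 0 <= f k) -> 0 <= sumR f n.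
Proof. induction n; simpl; intros h; [lra|]. pose proof (h n ltac:(lia)). pose proof (IHn ltac:(intros; apply h; lia)). lra. Qed.

Lemma sumR_eq0_nonneg f n : (forall k, (k < n)%nat -> 0 <= f k) -> sumR f n = 0 ->
  forall k, (k < n)%nat -> f k = 0.
Proof.
  induction n; simpl; intros h e k hk; [lia|].
  pose proof (h n ltac:(lia)). pose proof (sumR_nonneg f n ltac:(intros; apply h; lia)).
  destruct (Nat.eq_dec k n); [subst; lra|]. apply IHn; try lra. intros; apply h; lia. lia.
Qed.

Lemma sumR_cv (u : nat -> nat -> R) (l : nat -> R) n :
  (forall k, (k < n)%nat -> Un_cv (fun m => u m k) (l k)) ->
  Un_cv (fun m => sumR (u m) n) (sumR l n).
Proof.
  induction n; simpl; intros h.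
  - apply Un_cv_const.
  - apply CV_plus. apply IHn; intros; apply h; lia. apply h; lia.
Qed.

Lemma sumR_locate (t : nat -> R) n s : (forall k, (k < n)%nat -> 0 < t k) -> 0 <= s < sumR t n ->
  exists k, (k < n)%nat /\ sumR t k <= s < sumR t k + t k.
Proof.
  induction n; simpl; intros ht hs; [lra|].
  destruct (Rlt_dec s (sumR t n)) as [l|l].
  - destruct IHn as (k & hk & h); auto. split; lra. exists k; split; auto.
  - exists n; split; auto. lra.
Qed.

Lemma telescope_nonneg_steps (g : nat -> R) n a : (0 < n)%nat -> 0 <= a -> g n = g O ->
  (forall k, (k < n)%nat -> exists t, 0 < t /\ g (S k) - g k = t * a) -> a = 0.
Proof.
  intros hn ha he key.
  assert (hnn : forall k, (k < n)%nat -> 0 <= g (S k) - g k).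
  { intros k hk. destruct (key k hk) as (t & ht & et). rewrite et. nra. }
  assert (hsum : sumR (fun k => g (S k) - g k) n = 0) by (rewrite sumR_telescope, he; ring).
  pose proof (sumR_eq0_nonneg _ n hnn hsum O hn) as hz. simpl in hz.
  destruct (key O hn) as (t & ht & et). rewrite hz in et. nra.
Qed.

Fixpoint count_true (f : nat -> bool) (n : nat) : nat :=
  match n with O => O | S m => (count_true f m + if f m then 1 else 0)%nat end.

Lemma count_true_INR f n : INR (count_true f n) = sumR (fun k => if f k then 1 else 0) n.
Proof. induction n; simpl; auto. rewrite plus_INR, IHn. destruct (f n); simpl; ring. Qed.

Lemma count_true_eq0 f n : count_true f n = O -> forall k, (k < n)%nat -> f k = false.
Proof.
  induction n; simpl; intros h k hk; [lia|]. destruct (f n) eqn:E; [lia|].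
  destruct (Nat.eq_dec k n); [subst; auto|]. apply IHn; lia.
Qed.

Lemma count_true_pos f n : (0 < count_true f n)%nat -> exists k, (k < n)%nat /\ f k = true.
Proof.
  induction n; simpl; intros h; [lia|]. destruct (f n) eqn:E.
  - exists n; split; auto.
  - destruct IHn as (k & hk & e); [lia|]. exists k; split; auto.
Qed.

(** The side hit at time [k <= n]; at time [n] the orbit is back at its start. *)
Definition itin_at (n : nat) (itin : nat -> nat) (k : nat) : nat := if (k <? n)%nat then itin k else itin O.

Lemma itin_at_lt n itin k : (k < n)%nat -> itin_at n itin k = itin k.
Proof. intros h; unfold itin_at; destruct (Nat.ltb_spec k n); auto; lia. Qed.

Lemma itin_at_n n itin : itin_at n itin n = itin O.
Proof. unfold itin_at; destruct (Nat.ltb_spec n n); auto; lia. Qed.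

Lemma itin_at_0 n itin : (0 < n)%nat -> itin_at n itin O = itin O.
Proof. intros; apply itin_at_lt; auto. Qed.

Definition hits_horiz (n : nat) (itin : nat -> nat) : nat := count_true (fun k => Nat.even (itin k)) n.
Definition hits_vert (n : nat) (itin : nat -> nat) : nat := count_true (fun k => Nat.odd (itin k)) n.

Lemma in_cyl_period_pos w n itin q : in_cyl w n itin q -> (0 < n)%nat.
Proof. intros h; apply h. Qed.

Lemma in_cyl_closed w n itin q : in_cyl w n itin q -> q n = q O.
Proof. intros h; apply h. Qed.

Lemma orbit_side w F n itin q : is_orbit w F n itin q -> forall k, (k <= n)%nat -> on_side w (itin_at n itin k) (fst (q k)).
Proof.
  intros (h0 & h1 & h2 & h3) k hk. unfold itin_at. destruct (Nat.ltb_spec k n).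
  - apply h3; auto.
  - assert (k = n) by lia. subst. rewrite h2. apply h3; auto.
Qed.

Lemma orbit_step w n itin q : 0 < w -> in_cyl w n itin q -> forall k, (k < n)%nat ->
  exists t, step w (q k) (q (S k)) (itin_at n itin k) (itin_at n itin (S k)) t.
Proof.
  intros hw hq k hk. pose proof hq as (h0 & h1 & h2 & h3).
  destruct (Bill_step _ _ _ (h1 k hk)) as (i & j & t & hs). exists t.
  pose proof (orbit_side _ _ _ _ _ hq k ltac:(lia)) as s1.
  pose proof (orbit_side _ _ _ _ _ hq (S k) ltac:(lia)) as s2.
  rewrite <- (on_side_unique _ _ _ _ hw (st_i _ _ _ _ _ _ hs) s1).
  rewrite <- (on_side_unique _ _ _ _ hw (st_j _ _ _ _ _ _ hs) s2). auto.
Qed.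

Lemma orbitL_step w l n itin q : 0 < w -> is_orbit w (PhiL w l) n itin q -> forall k, (k < n)%nat ->
  exists z t, step w (q k) z (itin_at n itin k) (itin_at n itin (S k)) t /\ q (S k) = (fst z, l * snd z).
Proof.
  intros hw hq k hk. pose proof hq as (h0 & h1 & h2 & h3).
  destruct (h1 k hk) as (z & hb & ez & _).
  destruct (Bill_step _ _ _ hb) as (i & j & t & hs). exists z, t. split; auto.
  pose proof (orbit_side _ _ _ _ _ hq k ltac:(lia)) as s1.
  pose proof (orbit_side _ _ _ _ _ hq (S k) ltac:(lia)) as s2.
  rewrite ez in s2; simpl in s2.
  rewrite <- (on_side_unique _ _ _ _ hw (st_i _ _ _ _ _ _ hs) s1).
  rewrite <- (on_side_unique _ _ _ _ hw (st_j _ _ _ _ _ _ hs) s2). auto.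
Qed.

Lemma orbit_angle w n itin q : 0 < w -> in_cyl w n itin q -> forall k, (k <= n)%nat -> - (PI/2) < snd (q k) < PI/2.
Proof.
  intros hw hq k hk. destruct (Nat.eq_dec k n) as [e|ne].
  - subst k. rewrite (in_cyl_closed _ _ _ _ hq).
    destruct (orbit_step _ _ _ _ hw hq O (in_cyl_period_pos _ _ _ _ hq)) as [t s]. exact (st_thx _ _ _ _ _ _ s).
  - destruct (orbit_step _ _ _ _ hw hq k ltac:(lia)) as [t s]. exact (st_thx _ _ _ _ _ _ s).
Qed.

Lemma Rabs_sin_angle th : - (PI/2) < th < PI/2 -> Rabs (sin th) = sin (Rabs th).
Proof.
  intros h. destruct (Rle_dec 0 th).
  - rewrite !Rabs_pos_eq; auto. apply sin_ge_0; lra.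
  - rewrite (Rabs_left th) by lra. rewrite sin_neg. rewrite Rabs_left; auto.
    apply sin_lt_0_var; lra.
Qed.

Lemma cos_Rabs th : cos th = cos (Rabs th).
Proof. destruct (Rle_dec 0 th); [rewrite Rabs_pos_eq; auto|rewrite Rabs_left, cos_neg; auto; lra]. Qed.

Lemma Rabs_angle th : - (PI/2) < th < PI/2 -> 0 <= Rabs th < PI/2.
Proof. intros h; split; [apply Rabs_pos|]. unfold Rabs; destruct (Rcase_abs th); lra. Qed.

(** Angle in [[0, pi/2]] between the horizontal and the direction leaving side [i]
    at angle [th] from its normal. *)
Definition slope_angle (i : nat) (th : R) : R := if Nat.even i then PI/2 - Rabs th else Rabs th.

Lemma slope_angle_range i th : - (PI/2) < th < PI/2 -> 0 <= slope_angle i th <= PI/2.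
Proof. intros h; pose proof (Rabs_angle _ h); unfold slope_angle; destruct (Nat.even i); lra. Qed.

Lemma dir_abs_fst i th : (i < 4)%nat -> - (PI/2) < th < PI/2 -> Rabs (fst (dir i th)) = cos (slope_angle i th).
Proof.
  intros hi h. pose proof (cos_angle_pos _ h). rewrite dirE by auto. unfold slope_angle.
  destruct i as [|[|[|[|i]]]]; simpl; try lia;
    rewrite ?cos_shift, <- ?(Rabs_sin_angle _ h), <- ?cos_Rabs, ?Rabs_Ropp; auto; apply Rabs_pos_eq; lra.
Qed.

Lemma dir_abs_snd i th : (i < 4)%nat -> - (PI/2) < th < PI/2 -> Rabs (snd (dir i th)) = sin (slope_angle i th).
Proof.
  intros hi h. pose proof (cos_angle_pos _ h). rewrite dirE by auto. unfold slope_angle.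
  destruct i as [|[|[|[|i]]]]; simpl; try lia;
    rewrite ?sin_shift, <- ?(Rabs_sin_angle _ h), <- ?cos_Rabs, ?Rabs_Ropp; auto; apply Rabs_pos_eq; lra.
Qed.

Lemma step_slope_angle w x y i j t : step w x y i j t -> slope_angle j (snd y) = slope_angle i (snd x).
Proof.
  intros hs. pose proof (step_abs_components _ _ _ _ _ _ hs) as [e _].
  pose proof (st_thx _ _ _ _ _ _ hs) as hx. pose proof (st_thy _ _ _ _ _ _ hs) as hy.
  pose proof (step_src_lt4 _ _ _ _ _ _ hs). pose proof (step_dst_lt4 _ _ _ _ _ _ hs).
  rewrite (dir_abs_fst j), (dir_abs_fst i) in e by auto.
  pose proof (slope_angle_range j _ hy). pose proof (slope_angle_range i _ hx).
  apply cos_inj; auto; lra.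
Qed.

Lemma orbit_slope_angle w n itin q : 0 < w -> in_cyl w n itin q -> forall k, (k <= n)%nat ->
  slope_angle (itin_at n itin k) (snd (q k)) = slope_angle (itin_at n itin O) (snd (q O)).
Proof.
  intros hw hq. induction k; intros hk; auto. destruct (orbit_step _ _ _ _ hw hq k ltac:(lia)) as [t hs].
  rewrite (step_slope_angle _ _ _ _ _ _ hs). apply IHk; lia.
Qed.

Lemma orbit_abs_components w n itin q : 0 < w -> in_cyl w n itin q -> forall k, (k <= n)%nat ->
  Rabs (fst (dir (itin_at n itin k) (snd (q k)))) = Rabs (fst (dir (itin_at n itin O) (snd (q O)))) /\
  Rabs (snd (dir (itin_at n itin k) (snd (q k)))) = Rabs (snd (dir (itin_at n itin O) (snd (q O)))).
Proof.
  intros hw hq. induction k; intros hk; auto. destruct (orbit_step _ _ _ _ hw hq k ltac:(lia)) as [t hs].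
  destruct (step_abs_components _ _ _ _ _ _ hs) as [e1 e2]. rewrite e1, e2. apply IHk; lia.
Qed.

(** * A necessary condition for [lambda]-stability *)

Definition side_sign (i : nat) : R := if Nat.even i then 1 else -1.

(** At each collision [Phi_l] changes the angle with the horizontal by
    [(1 - l)/l] times the (signed) new angle with the normal. *)
Lemma PhiL_orbit_angle_balance w l n itin r : 0 < w -> 0 < l -> l <> 1 -> is_orbit w (PhiL w l) n itin r ->
  sumR (fun k => side_sign (itin k) * Rabs (snd (r k))) n = 0.
Proof.
  intros hw hl hl1 hr.
  pose proof hr as (h0 & h1 & h2 & h3).
  set (g := fun k => side_sign (itin_at n itin k) * Rabs (snd (r k))).
  set (B := fun k => slope_angle (itin_at n itin k) (snd (r k))).
  assert (key : forall k, (k < n)%nat -> B (S k) - B k = (1 - l) / l * g (S k)).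
  { intros k hk. destruct (orbitL_step _ _ _ _ _ hw hr k hk) as (z & t & hs & ez).
    pose proof (step_slope_angle _ _ _ _ _ _ hs) as eb. unfold B, g. rewrite <- eb, ez. cbn [fst snd].
    unfold slope_angle, side_sign. rewrite !Rabs_mult, (Rabs_pos_eq l) by lra.
    destruct (Nat.even (itin_at n itin (S k))); field; lra. }
  assert (e1 : sumR (fun k => B (S k) - B k) n = 0).
  { rewrite sumR_telescope. unfold B. rewrite itin_at_n, itin_at_0, h2 by auto. ring. }
  rewrite (sumR_ext _ (fun k => (1 - l)/l * g (S k)) _ key), sumR_scal in e1.
  assert (e2 : sumR (fun k => g (S k)) n = 0).
  { apply Rmult_integral in e1. destruct e1 as [e|e]; auto. exfalso.
    assert ((1 - l) / l <> 0).
    { unfold Rdiv. apply Rmult_integral_contrapositive; split; [lra|apply Rinv_neq_0_compat; lra]. }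
    auto. }
  rewrite sumR_shift in e2. unfold g at 2 3 in e2. rewrite itin_at_n, itin_at_0, h2 in e2 by auto.
  rewrite <- (sumR_ext g). lra. intros k hk; unfold g; rewrite itin_at_lt; auto.
Qed.

Lemma decreasing_cv_gt (lam : nat -> R) l : (forall m, lam (S m) < lam m) -> Un_cv lam l -> forall m, l < lam m.
Proof.
  intros hd hc m. destruct (Rlt_dec l (lam m)) as [h|h]; auto. exfalso.
  assert (mono : forall j, lam (j + S m)%nat <= lam (S m)).
  { induction j; simpl; [lra|]. pose proof (hd (j + S m)%nat). lra. }
  pose proof (hd m).
  destruct (hc (l - lam (S m)) ltac:(lra)) as [N hN].
  specialize (hN (N + S m)%nat ltac:(lia)). specialize (mono N).
  unfold Rdist in hN. rewrite Rabs_left in hN by lra. lra.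
Qed.

Lemma lam_plus_stable_angle_balance w n itin q : 0 < w -> lam_plus_stable w n itin q ->
  sumR (fun k => side_sign (itin k) * Rabs (snd (q k))) n = 0.
Proof.
  intros hw (lam & qs & hd & hc & ho & hcv).
  pose proof (decreasing_cv_gt _ _ hd hc) as hg.
  assert (hz : forall m, sumR (fun k => side_sign (itin k) * Rabs (snd (qs m k))) n = 0).
  { intros m. specialize (hg m). apply (PhiL_orbit_angle_balance w (lam m)); auto; lra. }
  assert (hcv2 : Un_cv (fun m => sumR (fun k => side_sign (itin k) * Rabs (snd (qs m k))) n)
                   (sumR (fun k => side_sign (itin k) * Rabs (snd (q k))) n)).
  { apply (sumR_cv (fun m k => side_sign (itin k) * Rabs (snd (qs m k)))). intros k hk.
    apply CV_mult; [apply Un_cv_const|]. apply cv_cvabs. apply hcv; auto. }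
  apply (UL_sequence _ _ _ hcv2). intros e he; exists 0%nat; intros j _. rewrite hz. unfold Rdist; rewrite Rminus_diag, Rabs_R0; auto.
Qed.

(** * Closing the unfolded trajectory *)

(** The coordinates of [P] measured from the sides that the direction [D] moves away from. *)
Definition fwd_x (w : R) (P D : R * R) : R := if Rlt_dec 0 (fst D) then fst P else w - fst P.
Definition fwd_y (P D : R * R) : R := if Rlt_dec 0 (snd D) then snd P else 1 - snd P.

Lemma step_fwd_progress w x y i j t : 0 < w -> step w x y i j t ->
  t * Rabs (fst (dir i (snd x))) =
    fwd_x w (bpos w (fst y)) (dir j (snd y)) - fwd_x w (bpos w (fst x)) (dir i (snd x)) + (if Nat.even j then 0 else w) /\
  t * Rabs (snd (dir i (snd x))) =
    fwd_y (bpos w (fst y)) (dir j (snd y)) - fwd_y (bpos w (fst x)) (dir i (snd x)) + (if Nat.even j then 1 else 0).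
Proof.
  intros hw hs.
  pose proof (step_arrival_sign _ _ _ _ _ _ hw hs) as har.
  pose proof (step_dst_edge _ _ _ _ _ _ hw hs) as p2.
  pose proof (on_edge_rect _ _ _ hw (step_src_edge _ _ _ _ _ _ hw hs)) as p1.
  pose proof (st_t _ _ _ _ _ _ hs) as ht. pose proof (step_dst_lt4 _ _ _ _ _ _ hs) as hj.
  rewrite (st_dir _ _ _ _ _ _ hs). rewrite (st_pos _ _ _ _ _ _ hs) in *.
  destruct (dir i (snd x)) as [a b]. destruct (bpos w (fst x)) as [X Y].
  unfold fwd_x, fwd_y, mirror, vadd, vscal in *; simpl in *.
  destruct j as [|[|[|[|j]]]]; simpl in *; try lia;
  destruct (Rlt_dec 0 a); destruct (Rlt_dec 0 b); destruct (Rlt_dec 0 (-a)); destruct (Rlt_dec 0 (-b)); try lra;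
  split; try (rewrite Rabs_pos_eq by lra; lra); try (rewrite Rabs_left by lra; lra); try (rewrite Rabs_left1 by lra; lra).
Qed.

Section Closing.
Variables (w : R) (n : nat) (itin : nat -> nat) (q : nat -> R * R).
Hypothesis hw : 0 < w.
Hypothesis hq : in_cyl w n itin q.

Local Notation D k := (dir (itin_at n itin k) (snd (q k))).
Local Notation P k := (bpos w (fst (q k))).
Let U k := fwd_x w (P k) (D k).
Let W k := fwd_y (P k) (D k).

Lemma orbit_fwd_progress k : (k < n)%nat -> exists t, 0 < t /\
  t * Rabs (fst (D O)) = U (S k) - U k + (if Nat.even (itin_at n itin (S k)) then 0 else w) /\
  t * Rabs (snd (D O)) = W (S k) - W k + (if Nat.even (itin_at n itin (S k)) then 1 else 0).
Proof.
  intros hk. destruct (orbit_step _ _ _ _ hw hq k hk) as [t hs].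
  destruct (step_fwd_progress _ _ _ _ _ _ hw hs) as [e1 e2].
  destruct (orbit_abs_components _ _ _ _ hw hq k ltac:(lia)) as [m1 m2].
  exists t. rewrite m1 in e1. rewrite m2 in e2. split; [exact (st_t _ _ _ _ _ _ hs)|auto].
Qed.

Lemma orbit_fwd_period : U n = U O /\ W n = W O.
Proof.
  unfold U, W. rewrite itin_at_n, itin_at_0 by exact (in_cyl_period_pos _ _ _ _ hq).
  rewrite (in_cyl_closed _ _ _ _ hq). auto.
Qed.

Lemma sumR_shifted_indicator (f : nat -> bool) :
  sumR (fun k => if f (itin_at n itin (S k)) then 1 else 0) n = INR (count_true (fun k => f (itin k)) n).
Proof.
  pose proof (in_cyl_period_pos _ _ _ _ hq) as hn.
  rewrite count_true_INR, (sumR_shift (fun k => if f (itin_at n itin k) then 1 else 0)).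
  rewrite itin_at_n, itin_at_0 by auto.
  rewrite (sumR_ext (fun k => if f (itin_at n itin k) then 1 else 0) (fun k => if f (itin k) then 1 else 0));
    [ring|intros k hk; rewrite itin_at_lt; auto].
Qed.

(** Over a period the trajectory travels [2 w V] horizontally and [2 H] vertically
    in the unfolded plane, along a line of direction [D 0]. *)
Lemma orbit_closing :
  w * INR (hits_vert n itin) * Rabs (snd (D O)) = INR (hits_horiz n itin) * Rabs (fst (D O)).
Proof.
  set (a := Rabs (fst (D O))). set (b := Rabs (snd (D O))).
  set (ov := fun k => if Nat.odd (itin_at n itin (S k)) then 1 else 0).
  set (ev := fun k => if Nat.even (itin_at n itin (S k)) then 1 else 0).
  assert (key : forall k, (k < n)%nat ->
     b * (U (S k) - U k) + (b * w) * ov k = a * (W (S k) - W k) + a * ev k).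
  { intros k hk. destruct (orbit_fwd_progress k hk) as (t & _ & e1 & e2). fold a in e1. fold b in e2.
    unfold ov, ev, Nat.odd. destruct (Nat.even (itin_at n itin (S k))); cbn [negb] in *; nra. }
  pose proof (sumR_ext _ _ n key) as es.
  rewrite !sumR_plus, !sumR_scal, !sumR_telescope in es.
  destruct orbit_fwd_period as [eU eW]. rewrite eU, eW in es.
  unfold ov, ev in es. rewrite !sumR_shifted_indicator in es.
  unfold hits_vert, hits_horiz. fold a b. lra.
Qed.

Lemma orbit_no_vert_hits : hits_vert n itin = O -> Rabs (fst (D O)) = 0.
Proof.
  intros h0. pose proof (in_cyl_period_pos _ _ _ _ hq) as hn.
  apply (telescope_nonneg_steps U n); [auto|apply Rabs_pos|apply orbit_fwd_period|].
  intros k hk. destruct (orbit_fwd_progress k hk) as (t & ht & e1 & _). exists t; split; auto.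
  assert (ho : Nat.odd (itin_at n itin (S k)) = false).
  { destruct (Nat.eq_dec (S k) n) as [e|ne].
    - rewrite e, itin_at_n. exact (count_true_eq0 _ _ h0 O hn).
    - rewrite itin_at_lt by lia. apply (count_true_eq0 _ _ h0). lia. }
  unfold Nat.odd in ho. destruct (Nat.even (itin_at n itin (S k))); simpl in ho; try discriminate. lra.
Qed.

Lemma orbit_no_horiz_hits : hits_horiz n itin = O -> Rabs (snd (D O)) = 0.
Proof.
  intros h0. pose proof (in_cyl_period_pos _ _ _ _ hq) as hn.
  apply (telescope_nonneg_steps W n); [auto|apply Rabs_pos|apply orbit_fwd_period|].
  intros k hk. destruct (orbit_fwd_progress k hk) as (t & ht & _ & e2). exists t; split; auto.
  assert (ho : Nat.even (itin_at n itin (S k)) = false).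
  { destruct (Nat.eq_dec (S k) n) as [e|ne].
    - rewrite e, itin_at_n. exact (count_true_eq0 _ _ h0 O hn).
    - rewrite itin_at_lt by lia. apply (count_true_eq0 _ _ h0). lia. }
  rewrite ho in e2. lra.
Qed.

End Closing.

Lemma step_perpendicular w x y i j t : 0 < w -> step w x y i j t -> snd x = 0 ->
  normal j = vscal (-1) (normal i) /\ j = ((i + 2) mod 4)%nat /\
  bpos w (fst y) = vadd (bpos w (fst x)) (vscal t (normal i)).
Proof.
  intros hw hs h0. pose proof (step_arrival _ _ _ _ _ _ hw hs) as ha. pose proof (st_pos _ _ _ _ _ _ hs) as hp.
  rewrite h0, dir_0 in ha, hp.
  destruct (normal_opposite i j) as [hn hj]; auto;
    [exact (step_src_lt4 _ _ _ _ _ _ hs)|exact (step_dst_lt4 _ _ _ _ _ _ hs)].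
Qed.

Lemma Bill_reverse_perpendicular w x y : 0 < w -> Bill w x y -> snd x = 0 -> snd y = 0 -> Bill w y x.
Proof.
  intros hw hb hx hy. destruct (Bill_step _ _ _ hb) as (i & j & t & hs).
  destruct (step_perpendicular _ _ _ _ _ _ hw hs hx) as (hn & _ & hp).
  destruct x as [s a], y as [s' b]; simpl in *; subst a b.
  apply (Bill_perpendicular w j i s' s t); auto.
  - exact (st_j _ _ _ _ _ _ hs).
  - exact (st_i _ _ _ _ _ _ hs).
  - intros e; apply (step_sides_neq _ _ _ _ _ _ hw hs); auto.
  - rewrite hp, hn. unfold vadd, vscal. destruct (bpos w s), (normal i); simpl; f_equal; ring.
  - rewrite hn. unfold vscal. destruct (normal i); simpl; f_equal; ring.
Qed.

(** A cylinder whose orbits are all perpendicular has period [2] (the orbit bounces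
    straight back), so it is a ping-pong cylinder. *)
Lemma pingpong_of_perpendicular w n itin : 0 < w -> is_cyl w n itin ->
  (forall q, in_cyl w n itin q -> forall k, (k <= n)%nat -> snd (q k) = 0) -> ping_pong w n itin.
Proof.
  intros hw [q [hq hmin]] hz.
  pose proof (in_cyl_period_pos _ _ _ _ hq) as hn.
  destruct (orbit_step _ _ _ _ hw hq O hn) as [t0 s0].
  assert (n2 : n = 2%nat).
  { destruct (Nat.eq_dec n 1) as [e1|ne1].
    - exfalso. subst n. apply (step_sides_neq _ _ _ _ _ _ hw s0). reflexivity.
    - destruct (Nat.eq_dec n 2) as [e2|ne2]; auto. exfalso. apply (hmin 2%nat); try lia.
      pose proof hq as (_ & hb & _).
      apply (Bill_det w (q 1%nat)); auto; [apply hb; lia|].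
      apply Bill_reverse_perpendicular; [auto|apply hb; lia|apply (hz q hq); lia..]. }
  subst n. split; auto. split.
  - destruct (step_perpendicular _ _ _ _ _ _ hw s0 (hz q hq O ltac:(lia))) as (_ & hj & _).
    rewrite itin_at_lt in hj by lia. rewrite hj, itin_at_lt by lia. auto.
  - intros q' hq'. split; apply (hz q' hq'); lia.
Qed.

Lemma orbit_perpendicular_of_no_vert_hits w n itin q : 0 < w -> in_cyl w n itin q ->
  hits_vert n itin = O -> forall k, (k <= n)%nat -> snd (q k) = 0.
Proof.
  intros hw hq h0 k hk.
  pose proof (orbit_no_vert_hits _ _ _ _ hw hq h0) as a0.
  destruct (orbit_abs_components _ _ _ _ hw hq k hk) as [m1 _]. rewrite a0 in m1.
  pose proof (orbit_angle _ _ _ _ hw hq k hk) as th.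
  rewrite dir_abs_fst in m1 by (auto; eapply on_side_lt4, (orbit_side _ _ _ _ _ hq k hk)).
  assert (ev : Nat.even (itin_at n itin k) = true).
  { pose proof (in_cyl_period_pos _ _ _ _ hq).
    unfold itin_at. destruct (Nat.ltb_spec k n) as [l|l];
    [pose proof (count_true_eq0 _ _ h0 k l) as z|pose proof (count_true_eq0 _ _ h0 O ltac:(lia)) as z];
    unfold Nat.odd in z; destruct (Nat.even _); auto. }
  pose proof (slope_angle_range (itin_at n itin k) _ th) as hr.
  unfold slope_angle in m1, hr. rewrite ev in m1, hr. rewrite <- cos_PI2 in m1.
  apply cos_inj in m1; try lra. pose proof (Rabs_pos (snd (q k))).
  destruct (Rcase_abs (snd (q k))); [rewrite Rabs_left in m1|rewrite Rabs_right in m1]; lra.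
Qed.

Lemma orbit_perpendicular_of_no_horiz_hits w n itin q : 0 < w -> in_cyl w n itin q ->
  hits_horiz n itin = O -> forall k, (k <= n)%nat -> snd (q k) = 0.
Proof.
  intros hw hq h0 k hk.
  pose proof (orbit_no_horiz_hits _ _ _ _ hw hq h0) as a0.
  destruct (orbit_abs_components _ _ _ _ hw hq k hk) as [_ m1]. rewrite a0 in m1.
  pose proof (orbit_angle _ _ _ _ hw hq k hk) as th.
  rewrite dir_abs_snd in m1 by (auto; eapply on_side_lt4, (orbit_side _ _ _ _ _ hq k hk)).
  assert (ev : Nat.even (itin_at n itin k) = false).
  { pose proof (in_cyl_period_pos _ _ _ _ hq).
    unfold itin_at. destruct (Nat.ltb_spec k n) as [l|l];
    [exact (count_true_eq0 _ _ h0 k l)|exact (count_true_eq0 _ _ h0 O ltac:(lia))]. }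
  unfold slope_angle in m1. rewrite ev in m1. rewrite <- sin_0 in m1.
  pose proof (Rabs_angle _ th). apply sin_inj in m1; try lra.
  destruct (Rcase_abs (snd (q k))); [rewrite Rabs_left in m1|rewrite Rabs_right in m1]; lra.
Qed.

Lemma non_pingpong_hits_pos w n itin : 0 < w -> is_cyl w n itin -> ~ ping_pong w n itin ->
  (0 < hits_horiz n itin)%nat /\ (0 < hits_vert n itin)%nat.
Proof.
  intros hw hc hnp. split.
  - destruct (hits_horiz n itin) eqn:E; [|lia]. exfalso. apply hnp, pingpong_of_perpendicular; auto.
    intros q hq. exact (orbit_perpendicular_of_no_horiz_hits _ _ _ _ hw hq E).
  - destruct (hits_vert n itin) eqn:E; [|lia]. exfalso. apply hnp, pingpong_of_perpendicular; auto.
    intros q hq. exact (orbit_perpendicular_of_no_vert_hits _ _ _ _ hw hq E).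
Qed.

Lemma lam_stable_angle_relations w n itin : 0 < w -> lam_stable_cyl w n itin ->
  exists c, INR (hits_horiz n itin) * (PI/2 - c) = INR (hits_vert n itin) * c /\
            w * INR (hits_vert n itin) * sin c = INR (hits_horiz n itin) * cos c /\ 0 <= c <= PI/2.
Proof.
  intros hw (hc & (q & hq & hp) & _).
  pose proof (lam_plus_stable_angle_balance _ _ _ _ hw hp) as hs.
  pose proof (in_cyl_period_pos _ _ _ _ hq) as hn.
  set (c := slope_angle (itin_at n itin O) (snd (q O))).
  pose proof (orbit_angle _ _ _ _ hw hq O ltac:(lia)) as th0.
  assert (hi0 : (itin_at n itin O < 4)%nat) by (eapply on_side_lt4; apply (orbit_side _ _ _ _ _ hq O); lia).
  exists c. split; [|split].
  - rewrite (sumR_ext _ (fun k => (PI/2 - c) * (if Nat.even (itin k) then 1 else 0) + (-c) * (if Nat.odd (itin k) then 1 else 0))) in hs.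
    + rewrite sumR_plus, !sumR_scal, <- !count_true_INR in hs. unfold hits_horiz, hits_vert. lra.
    + intros k hk. pose proof (orbit_slope_angle _ _ _ _ hw hq k ltac:(lia)) as eb. fold c in eb.
      rewrite itin_at_lt in eb by auto. unfold slope_angle in eb. unfold side_sign, Nat.odd.
      destruct (Nat.even (itin k)); simpl; lra.
  - pose proof (orbit_closing _ _ _ _ hw hq) as e.
    rewrite dir_abs_fst, dir_abs_snd in e by auto. fold c in e. lra.
  - apply slope_angle_range; auto.
Qed.

Lemma lam_stable_special_width w n itin : 0 < w -> lam_stable_cyl w n itin ->
  (0 < hits_horiz n itin)%nat -> (0 < hits_vert n itin)%nat ->
  special_width w (hits_horiz n itin) (hits_vert n itin).
Proof.
  intros hw hs h1 h2. destruct (lam_stable_angle_relations _ _ _ hw hs) as (c & e1 & e2 & hc).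
  pose proof (lt_0_INR _ h1) as hH. pose proof (lt_0_INR _ h2) as hV.
  set (H := INR (hits_horiz n itin)) in *. set (V := INR (hits_vert n itin)) in *.
  assert (ec : c = PI * H / (2 * (H + V))) by (field_simplify_eq; lra).
  assert (c0 : 0 < c < PI/2).
  { rewrite ec. pose proof PI_RGT_0. split.
    apply Rdiv_lt_0_compat; nra.
    apply (Rmult_lt_reg_r (2 * (H + V))). lra. field_simplify; try lra. nra. }
  assert (sp : 0 < sin c) by (apply sin_gt_0; lra).
  unfold special_width. fold H V. rewrite <- ec. unfold cot.
  field_simplify_eq; try lra.
Qed.

(** * Uniqueness of [p/q] *)

(** [special_width w p q] reads [w = width_of_angle t] with [t = pi p / (2 (p + q))]. *)
Definition width_of_angle (t : R) : R := 2 * t * cos t / ((PI - 2 * t) * sin t).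

Module WidthMonotone.
Import Coquelicot.Coquelicot.

Lemma is_derive_width_of_angle t : 0 < t < PI/2 ->
  is_derive width_of_angle t ((2 * PI * sin t * cos t - 2 * t * (PI - 2 * t)) / ((PI - 2 * t) * sin t)^2).
Proof.
  intros ht. assert (0 < sin t) by (apply sin_gt_0; lra).
  unfold width_of_angle. auto_derive.
  - apply Rmult_integral_contrapositive; split; lra.
  - pose proof (sin2_cos2 t) as e. unfold Rsqr in e.
    set (s := sin t) in *. set (c := cos t) in *.
    assert (PI - 2 * t <> 0) by lra.
    field_simplify; try (split; lra).
    replace (c ^ 2) with (1 - s ^ 2) by (simpl; lra). f_equal. ring.
Qed.

Lemma PI_lt_16_5 : PI < 16/5.
Proof.
  destruct (Rlt_dec PI (16/5)) as [h|h]; auto. exfalso.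
  assert (hc : 0 <= cos (8/5)).
  { destruct (Req_dec (8/5) (PI/2)) as [e|e]. rewrite e, cos_PI2; lra.
    left; apply cos_gt_0; lra. }
  pose proof (COS (8/5) ltac:(pose proof PI_RGT_0; lra) ltac:(lra)) as [_ hu].
  unfold cos_ub, cos_approx in hu. cbn [sum_f_R0] in hu. unfold cos_term in hu.
  cbn [Nat.mul Nat.add] in hu.
  rewrite !fact_simpl, !mult_INR in hu. cbn [Factorial.fact] in hu.
  rewrite ?S_INR in hu. simpl INR in hu. simpl pow in hu.
  lra.
Qed.

(** From the Taylor bound [sin u >= u - u^3/6 + u^5/120 - u^7/5040]. *)
Lemma sin_gt_parabola_half u : 0 < u <= PI/2 -> u * (PI - u) < PI * sin u.
Proof.
  intros hu. pose proof PI_lt_16_5 as hp. pose proof PI2_3_2. pose proof PI_RGT_0.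
  pose proof (SIN u ltac:(lra) ltac:(lra)) as [hl _].
  unfold sin_lb, sin_approx in hl. cbn [sum_f_R0] in hl. unfold sin_term in hl.
  cbn [Nat.mul Nat.add] in hl.
  rewrite !fact_simpl, !mult_INR in hl. cbn [Factorial.fact] in hl.
  rewrite ?S_INR in hl. simpl INR in hl. simpl pow in hl.
  set (taylor := u - u*u*u/6 + u*u*u*u*u/120 - u*u*u*u*u*u*u/5040).
  assert (hs : taylor <= sin u) by (unfold taylor; lra).
  assert (h5 : u*u*u*u*u <= 11) by (assert (u*u <= 64/25) by nra; assert (u*u*u*u <= 4096/625) by nra; nra).
  assert (hk : 0 < 1 - PI * u / 6 - PI * (u*u*u*u*u) / 5040).
  { assert (PI * u <= 16/5 * (8/5)) by (apply Rmult_le_compat; lra).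
    assert (0 <= u*u*u*u*u) by (repeat apply Rmult_le_pos; lra).
    assert (PI * (u*u*u*u*u) <= 16/5 * 11) by (apply Rmult_le_compat; lra). lra. }
  assert (hcube : 0 <= PI * (u*u*u) / 120 * (u*u)).
  { assert (0 <= u*u*u) by (repeat apply Rmult_le_pos; lra).
    apply Rmult_le_pos; [|nra]. unfold Rdiv; apply Rmult_le_pos; [nra|left; apply Rinv_0_lt_compat; lra]. }
  assert (PI * taylor - u * (PI - u)
          = u*u * (1 - PI * u / 6 - PI * (u*u*u*u*u) / 5040) + PI * (u*u*u) / 120 * (u*u))
    by (unfold taylor; field).
  assert (0 < u*u * (1 - PI * u / 6 - PI * (u*u*u*u*u) / 5040)) by (apply Rmult_lt_0_compat; nra).
  assert (PI * taylor <= PI * sin u) by (apply Rmult_le_compat_l; lra).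
  lra.
Qed.

Lemma sin_gt_parabola u : 0 < u < PI -> u * (PI - u) < PI * sin u.
Proof.
  intros hu. destruct (Rle_dec u (PI/2)).
  - apply sin_gt_parabola_half; lra.
  - rewrite <- sin_PI_x. replace (u * (PI - u)) with ((PI - u) * (PI - (PI - u))) by ring.
    apply sin_gt_parabola_half; lra.
Qed.

Lemma width_of_angle_increasing x y : 0 < x -> x < y -> y < PI/2 -> width_of_angle x < width_of_angle y.
Proof.
  intros h1 h2 h3.
  apply (incr_function width_of_angle 0 (PI/2)
           (fun t => (2 * PI * sin t * cos t - 2 * t * (PI - 2 * t)) / ((PI - 2 * t) * sin t)^2));
    simpl; auto; try lra.
  - intros t a b. apply is_derive_width_of_angle; lra.
  - intros t a b. assert (0 < sin t) by (apply sin_gt_0; lra).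
    assert (0 < (PI - 2 * t) * sin t) by (apply Rmult_lt_0_compat; lra).
    apply Rdiv_lt_0_compat. 2: nra.
    pose proof (sin_gt_parabola (2 * t) ltac:(lra)) as hp. rewrite sin_2a in hp. nra.
Qed.

End WidthMonotone.

Lemma special_width_angle w p q : (0 < p)%nat -> (0 < q)%nat -> special_width w p q ->
  w = width_of_angle (PI * INR p / (2 * (INR p + INR q))) /\ 0 < PI * INR p / (2 * (INR p + INR q)) < PI/2.
Proof.
  intros hp hq e. pose proof (lt_0_INR _ hp). pose proof (lt_0_INR _ hq). pose proof PI_RGT_0.
  set (x := PI * INR p / (2 * (INR p + INR q))).
  assert (hx : 0 < x < PI/2).
  { unfold x. split. apply Rdiv_lt_0_compat; nra.
    apply (Rmult_lt_reg_r (2 * (INR p + INR q))). lra. field_simplify; try lra. nra. }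
  split; auto. unfold special_width, cot in e. fold x in e. rewrite e. unfold width_of_angle.
  assert (0 < sin x) by (apply sin_gt_0; lra).
  assert (e2 : PI - 2 * x = PI * INR q / (INR p + INR q)) by (unfold x; field; lra).
  rewrite e2. unfold x. field. repeat split; try lra. fold x. lra.
Qed.

Lemma special_width_ratio_unique w p q p' q' : (0 < p)%nat -> (0 < q)%nat -> (0 < p')%nat -> (0 < q')%nat ->
  special_width w p q -> special_width w p' q' -> INR p * INR q' = INR p' * INR q.
Proof.
  intros hp hq hp' hq' e e'.
  destruct (special_width_angle _ _ _ hp hq e) as [w1 r1]. destruct (special_width_angle _ _ _ hp' hq' e') as [w2 r2].
  set (x := PI * INR p / (2 * (INR p + INR q))) in *. set (x' := PI * INR p' / (2 * (INR p' + INR q'))) in *.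
  assert (ex : x = x').
  { destruct (Rtotal_order x x') as [l|[l|l]]; auto.
    - pose proof (WidthMonotone.width_of_angle_increasing x x' ltac:(lra) l ltac:(lra)). lra.
    - pose proof (WidthMonotone.width_of_angle_increasing x' x ltac:(lra) l ltac:(lra)). lra. }
  unfold x, x' in ex. pose proof (lt_0_INR _ hp). pose proof (lt_0_INR _ hq).
  pose proof (lt_0_INR _ hp'). pose proof (lt_0_INR _ hq'). pose proof PI_RGT_0.
  apply (Rmult_eq_compat_r ((2 * (INR p + INR q)) * (2 * (INR p' + INR q')) / PI)) in ex.
  field_simplify in ex; try lra.
Qed.

Lemma lam_stable_slope w p q n itin : 0 < w -> (0 < p)%nat -> (0 < q)%nat -> special_width w p q ->
  lam_stable_cyl w n itin -> ~ ping_pong w n itin -> cyl_abs_slope w n itin (INR p / (INR q * w)).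
Proof.
  intros hw hp hq hsp hs hnp.
  destruct (non_pingpong_hits_pos _ _ _ hw (proj1 hs) hnp) as [h1 h2].
  pose proof (special_width_ratio_unique _ _ _ _ _ hp hq h1 h2 hsp (lam_stable_special_width _ _ _ hw hs h1 h2)) as ei.
  intros q' hq' k hk.
  pose proof (orbit_closing _ _ _ _ hw hq') as ec.
  destruct (orbit_abs_components _ _ _ _ hw hq' k ltac:(lia)) as [m1 m2].
  rewrite itin_at_lt in m1, m2 by auto. rewrite m1, m2.
  pose proof (lt_0_INR _ hp) as hpR. pose proof (lt_0_INR _ hq) as hqR. pose proof (lt_0_INR _ h1) as hH. pose proof (lt_0_INR _ h2) as hV.
  set (H := INR (hits_horiz n itin)) in *. set (V := INR (hits_vert n itin)) in *.
  set (a := Rabs (fst (dir (itin_at n itin 0) (snd (q' 0%nat))))) in *.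
  set (b := Rabs (snd (dir (itin_at n itin 0) (snd (q' 0%nat))))) in *.
  apply (Rmult_eq_reg_l (INR q * w * V)); [|apply Rgt_not_eq; repeat apply Rmult_lt_0_compat; lra].
  field_simplify; [|lra]. replace (INR q * w * V * b) with (INR q * (w * V * b)) by ring.
  rewrite ec. replace (V * INR p) with (H * INR q) by lra. ring.
Qed.

(** * The invariant [zeta] *)

(** [sgn 0 = -1]: it is only applied to nonzero velocity components. *)
Definition sgn (x : R) : R := if Rlt_dec 0 x then 1 else -1.

Lemma sgn_pm x : sgn x = 1 \/ sgn x = -1.
Proof. unfold sgn; destruct (Rlt_dec 0 x); auto. Qed.

Lemma sgn_mul_abs x : x <> 0 -> sgn x * x = Rabs x.
Proof. intros h; unfold sgn; destruct (Rlt_dec 0 x); [rewrite Rabs_pos_eq; lra|rewrite Rabs_left; lra]. Qed.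

Lemma sgn_sq x : sgn x * sgn x = 1.
Proof. unfold sgn; destruct (Rlt_dec 0 x); ring. Qed.

Lemma sgn_abs x : x <> 0 -> x = sgn x * Rabs x.
Proof. intros h; unfold sgn; destruct (Rlt_dec 0 x); [rewrite Rabs_pos_eq; lra|rewrite Rabs_left; lra]. Qed.

Lemma sgn_pos x : 0 < x -> sgn x = 1.
Proof. intros; unfold sgn; destruct (Rlt_dec 0 x); lra. Qed.
Lemma sgn_neg x : x < 0 -> sgn x = -1.
Proof. intros; unfold sgn; destruct (Rlt_dec 0 x); lra. Qed.
Lemma sgn_opp x : x <> 0 -> sgn (- x) = - sgn x.
Proof. intros h; unfold sgn; destruct (Rlt_dec 0 x); destruct (Rlt_dec 0 (-x)); lra. Qed.

(** On a side, the component of the velocity along the normal has a fixed sign. *)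
Lemma dir_sgn_on_edge w i P th th' : on_edge w i P -> - (PI/2) < th < PI/2 -> - (PI/2) < th' < PI/2 ->
  (0 < fst P < w -> sgn (fst (dir i th)) = sgn (fst (dir i th'))) ->
  (0 < snd P < 1 -> sgn (snd (dir i th)) = sgn (snd (dir i th'))) ->
  sgn (fst (dir i th)) = sgn (fst (dir i th')) /\ sgn (snd (dir i th)) = sgn (snd (dir i th')).
Proof.
  intros hP h h' hx hy. pose proof (cos_angle_pos _ h). pose proof (cos_angle_pos _ h').
  destruct P as [X Y]. pose proof (on_edge_lt4 _ _ _ hP).
  rewrite !dirE in * by auto. destruct i as [|[|[|[|i]]]]; simpl in *; try lia; destruct hP as [_ hP];
  (split; [apply hx; lra|]) || (split; [|apply hy; lra]);
  rewrite ?sgn_pos, ?sgn_neg by lra; auto.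
Qed.

Section Invariant.
Variables (w : R) (p q : nat).
Hypothesis hw : 0 < w.
Hypothesis hp : (0 < p)%nat.
Hypothesis hq : (0 < q)%nat.

Definition pR : R := INR p.
Definition qR : R := INR q.
Definition slope : R := pR / (qR * w).

Lemma pR_pos : 0 < pR. Proof. apply lt_0_INR; auto. Qed.
Lemma qR_pos : 0 < qR. Proof. apply lt_0_INR; auto. Qed.
Lemma slope_pos : 0 < slope. Proof. unfold slope; pose proof pR_pos; pose proof qR_pos. apply Rdiv_lt_0_compat; nra. Qed.

(** Reflecting the table across its sides unfolds a trajectory of slope [p/(q w)]
    into a straight line of the plane, taken modulo the lattice [2wZ x 2Z]
    ([unfold_pt], [lat_eq] below); [zeta] is the intercept [p X / w - q Y] of that line. *)
Definition zeta (P D : R * R) : R := pR * sgn (fst D) * fst P / w - qR * sgn (snd D) * snd P.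

Definition sloped (D : R * R) : Prop := Rabs (snd D) = slope * Rabs (fst D) /\ fst D ^ 2 + snd D ^ 2 = 1.

Definition hspeed : R := / sqrt (1 + slope ^ 2).

Lemma sloped_abs_fst D : sloped D -> Rabs (fst D) = hspeed.
Proof.
  intros [h1 h2]. pose proof slope_pos.
  assert (e : Rabs (fst D) ^ 2 * (1 + slope ^ 2) = 1).
  { rewrite <- (pow2_abs (snd D)), <- (pow2_abs (fst D)) in h2. rewrite h1 in h2. lra. }
  assert (hs : 0 < sqrt (1 + slope^2)) by (apply sqrt_lt_R0; nra).
  assert (e2 : sqrt (1 + slope^2) ^ 2 = 1 + slope^2) by (rewrite <- Rsqr_pow2; apply Rsqr_sqrt; nra).
  assert (ha : 0 <= Rabs (fst D)) by apply Rabs_pos.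
  unfold hspeed. apply (Rmult_eq_reg_l (sqrt (1 + slope^2))); [|lra]. rewrite Rinv_r by lra.
  assert ((sqrt (1 + slope ^ 2) * Rabs (fst D))^2 = 1) by (rewrite Rpow_mult_distr, e2; lra).
  assert (0 <= sqrt (1 + slope ^ 2) * Rabs (fst D)) by nra. nra.
Qed.

Lemma hspeed_pos : 0 < hspeed.
Proof. unfold hspeed. apply Rinv_0_lt_compat. apply sqrt_lt_R0. pose proof slope_pos; nra. Qed.

Lemma sloped_fst_neq0 D : sloped D -> fst D <> 0.
Proof. intros h e. pose proof (sloped_abs_fst D h) as a. rewrite e, Rabs_R0 in a. pose proof hspeed_pos; lra. Qed.
Lemma sloped_snd_neq0 D : sloped D -> snd D <> 0.
Proof. intros h e. pose proof (sloped_abs_fst D h) as a. destruct h as [h1 _]. rewrite e, Rabs_R0, a in h1.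
  pose proof hspeed_pos; pose proof slope_pos; nra. Qed.

Lemma sloped_eq_of_sgn D D' : sloped D -> sloped D' -> sgn (fst D) = sgn (fst D') -> sgn (snd D) = sgn (snd D') -> D = D'.
Proof.
  intros h h' e1 e2. destruct D as [x y], D' as [x' y']. simpl in *.
  pose proof (sloped_abs_fst _ h) as a1. pose proof (sloped_abs_fst _ h') as a2. simpl in *.
  destruct h as [b1 _], h' as [b2 _]. simpl in *.
  rewrite (sgn_abs x), (sgn_abs x'), (sgn_abs y), (sgn_abs y'); try (apply sloped_snd_neq0 || apply sloped_fst_neq0); auto.
  - rewrite e1, e2, b1, b2, a1, a2. auto.
  all: intro; subst; rewrite Rabs_R0 in *; pose proof hspeed_pos; pose proof slope_pos; nra.
Qed.

Lemma zeta_flight P D t : sloped D -> zeta (vadd P (vscal t D)) D = zeta P D.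
Proof.
  intros h. unfold zeta, vadd, vscal; simpl.
  pose proof (sgn_mul_abs _ (sloped_fst_neq0 D h)) as ex. pose proof (sgn_mul_abs _ (sloped_snd_neq0 D h)) as ey.
  destruct h as [h1 _]. unfold slope in h1. pose proof pR_pos. pose proof qR_pos.
  assert (e : pR * sgn (fst D) * (t * fst D) / w - qR * sgn (snd D) * (t * snd D) = 0).
  { replace (pR * sgn (fst D) * (t * fst D) / w - qR * sgn (snd D) * (t * snd D))
      with (t * (pR * (sgn (fst D) * fst D) / w - qR * (sgn (snd D) * snd D))) by (field; lra).
    rewrite ex, ey, h1. field. lra. }
  replace (pR * sgn (fst D) * (fst P + t * fst D) / w - qR * sgn (snd D) * (snd P + t * snd D))
    with (pR * sgn (fst D) * fst P / w - qR * sgn (snd D) * snd P + (pR * sgn (fst D) * (t * fst D) / w - qR * sgn (snd D) * (t * snd D))) by (field; lra).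
  rewrite e; ring.
Qed.

Definition zeta_jump (j : nat) : R := match j with 1%nat => -2 * pR | 2%nat => 2 * qR | _ => 0 end.

Lemma zeta_step x y i j t : step w x y i j t -> sloped (dir i (snd x)) ->
  zeta (bpos w (fst y)) (dir j (snd y)) = zeta (bpos w (fst x)) (dir i (snd x)) + zeta_jump j.
Proof.
  intros hs hg.
  pose proof (step_arrival_sign _ _ _ _ _ _ hw hs) as har.
  pose proof (bpos_on_edge _ _ _ hw (st_j _ _ _ _ _ _ hs)) as p2.
  pose proof (zeta_flight (bpos w (fst x)) (dir i (snd x)) t hg) as ef.
  rewrite <- (st_pos _ _ _ _ _ _ hs) in ef. rewrite <- ef.
  rewrite (st_dir _ _ _ _ _ _ hs).
  pose proof (sloped_fst_neq0 _ hg) as n1. pose proof (sloped_snd_neq0 _ hg) as n2.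
  assert (hj : (j < 4)%nat) by (eapply on_side_lt4; exact (st_j _ _ _ _ _ _ hs)).
  destruct (dir i (snd x)) as [a b]. destruct (bpos w (fst y)) as [X Y].
  unfold zeta, mirror, zeta_jump in *; simpl in *.
  destruct j as [|[|[|[|j]]]]; simpl in *; try lia.
  - rewrite sgn_opp by auto. destruct p2 as [e _]; subst Y. ring.
  - rewrite sgn_opp by auto. destruct p2 as [e _]; subst X. rewrite sgn_pos by auto. field. lra.
  - rewrite sgn_opp by auto. destruct p2 as [e _]; subst Y. rewrite (sgn_pos b) by auto. ring.
  - rewrite sgn_opp by auto. destruct p2 as [e _]; subst X. field. lra.
Qed.

Definition gcdpq : Z := Z.gcd (Z.of_nat p) (Z.of_nat q).
Definition gR : R := IZR gcdpq.

Lemma gcdpq_pos : (0 < gcdpq)%Z.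
Proof. unfold gcdpq. pose proof (Z.gcd_nonneg (Z.of_nat p) (Z.of_nat q)).
  destruct (Z.eq_dec (Z.gcd (Z.of_nat p) (Z.of_nat q)) 0) as [e|e]; [|lia].
  apply Z.gcd_eq_0 in e. lia. Qed.

Lemma gR_pos : 0 < gR.
Proof. unfold gR. apply IZR_lt. apply gcdpq_pos. Qed.

Lemma pR_multiple : exists z : Z, pR = gR * IZR z.
Proof. pose proof (Z.gcd_divide_l (Z.of_nat p) (Z.of_nat q)) as d. fold gcdpq in d. destruct d as [z e]. exists z.
  unfold pR, gR. rewrite INR_IZR_INZ, e, mult_IZR. ring. Qed.

Lemma qR_multiple : exists z : Z, qR = gR * IZR z.
Proof. pose proof (Z.gcd_divide_r (Z.of_nat p) (Z.of_nat q)) as d. fold gcdpq in d. destruct d as [z e]. exists z.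
  unfold qR, gR. rewrite INR_IZR_INZ, e, mult_IZR. ring. Qed.

Lemma bezout_gR : exists al be : Z, pR * IZR al - qR * IZR be = gR.
Proof.
  destruct (Z.gcd_bezout (Z.of_nat p) (Z.of_nat q) gcdpq eq_refl) as [a [b e]].
  exists a, (- b)%Z. unfold pR, qR, gR. rewrite !INR_IZR_INZ, <- e, opp_IZR, plus_IZR, !mult_IZR. ring.
Qed.

Lemma not_both_even_multiples : ~ ((exists z1, pR = 2 * gR * IZR z1) /\ (exists z2, qR = 2 * gR * IZR z2)).
Proof.
  intros [[z1 e1] [z2 e2]].
  assert (d1 : (2 * gcdpq | Z.of_nat p)%Z).
  { exists z1. apply eq_IZR. rewrite <- INR_IZR_INZ. fold pR. rewrite e1, !mult_IZR. unfold gR. simpl. ring. }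
  assert (d2 : (2 * gcdpq | Z.of_nat q)%Z).
  { exists z2. apply eq_IZR. rewrite <- INR_IZR_INZ. fold qR. rewrite e2, !mult_IZR. unfold gR. simpl. ring. }
  pose proof (Z.gcd_greatest _ _ _ d1 d2) as d. fold gcdpq in d.
  pose proof gcdpq_pos. apply Z.divide_pos_le in d; lia.
Qed.

Definition congr2g (a b : R) : Prop := exists z : Z, a = b + 2 * gR * IZR z.
Definition multiple_gR (a : R) : Prop := exists z : Z, a = gR * IZR z.

Lemma congr2g_refl a : congr2g a a.
Proof. exists 0%Z. simpl. ring. Qed.
Lemma congr2g_sym a b : congr2g a b -> congr2g b a.
Proof. intros [z e]. exists (- z)%Z. rewrite opp_IZR. lra. Qed.
Lemma congr2g_trans a b c : congr2g a b -> congr2g b c -> congr2g a c.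
Proof. intros [z e] [z' e']. exists (z + z')%Z. rewrite plus_IZR. lra. Qed.
Lemma congr2g_add a b c : congr2g a b -> congr2g (a + c) (b + c).
Proof. intros [z e]. exists z. lra. Qed.

Lemma zeta_jump_congr j : congr2g (zeta_jump j) 0.
Proof.
  destruct pR_multiple as [z1 e1]. destruct qR_multiple as [z2 e2].
  unfold zeta_jump. destruct j as [|[|[|j]]].
  - apply congr2g_refl.
  - exists (- z1)%Z. rewrite opp_IZR, e1. ring.
  - exists z2. rewrite e2. ring.
  - apply congr2g_refl.
Qed.

Lemma multiple_gR_congr a b : congr2g a b -> multiple_gR b -> multiple_gR a.
Proof. intros [z e] [z' e']. exists (2 * z + z')%Z. rewrite plus_IZR, mult_IZR. simpl. lra. Qed.

Lemma multiple_gR_not_between a m : multiple_gR a -> gR * IZR m < a < gR * (IZR m + 1) -> False.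
Proof.
  intros [z e] [h1 h2]. subst a. pose proof gR_pos.
  assert (l1 : IZR m < IZR z) by (apply (Rmult_lt_reg_l gR); lra).
  assert (l2 : IZR z < IZR m + 1) by (apply (Rmult_lt_reg_l gR); lra).
  apply lt_IZR in l1. rewrite <- plus_IZR in l2. apply lt_IZR in l2. lia.
Qed.

Definition corner (P : R * R) : Prop := (fst P = 0 \/ fst P = w) /\ (snd P = 0 \/ snd P = 1).

Lemma zeta_corner P D : corner P -> multiple_gR (zeta P D).
Proof.
  intros [h1 h2]. destruct pR_multiple as [z1 e1]. destruct qR_multiple as [z2 e2]. unfold zeta.
  assert (s1 : sgn (fst D) = 1 \/ sgn (fst D) = -1) by (unfold sgn; destruct (Rlt_dec 0 (fst D)); auto).
  assert (s2 : sgn (snd D) = 1 \/ sgn (snd D) = -1) by (unfold sgn; destruct (Rlt_dec 0 (snd D)); auto).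
  rewrite e1, e2.
  destruct h1 as [h1|h1]; destruct h2 as [h2|h2]; rewrite h1, h2;
  destruct s1 as [s1|s1]; destruct s2 as [s2|s2]; rewrite s1, s2.
  all: try (exists 0%Z; simpl; field; lra).
  all: try (exists z1; field; lra).
  all: try (exists (- z1)%Z; rewrite opp_IZR; field; lra).
  all: try (exists z2; field; lra).
  all: try (exists (- z2)%Z; rewrite opp_IZR; field; lra).
  all: try (exists (z1 - z2)%Z; rewrite minus_IZR; field; lra).
  all: try (exists (z1 + z2)%Z; rewrite plus_IZR; field; lra).
  all: try (exists (- z1 - z2)%Z; rewrite minus_IZR, opp_IZR; field; lra).
  all: try (exists (- z1 + z2)%Z; rewrite plus_IZR, opp_IZR; field; lra).
Qed.

Definition lat_eq (U V : R * R) : Prop :=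
  exists i j : Z, fst U = fst V + 2 * w * IZR i /\ snd U = snd V + 2 * IZR j.

Lemma lat_eq_refl U : lat_eq U U.
Proof. exists 0%Z, 0%Z. simpl; split; ring. Qed.
Lemma lat_eq_sym U V : lat_eq U V -> lat_eq V U.
Proof. intros (i & j & e1 & e2). exists (-i)%Z, (-j)%Z. rewrite !opp_IZR. split; lra. Qed.
Lemma lat_eq_trans U V W : lat_eq U V -> lat_eq V W -> lat_eq U W.
Proof. intros (i & j & e1 & e2) (i' & j' & e1' & e2'). exists (i + i')%Z, (j + j')%Z. rewrite !plus_IZR. split; lra. Qed.
Lemma lat_eq_add U V W : lat_eq U V -> lat_eq (vadd U W) (vadd V W).
Proof. intros (i & j & e1 & e2). exists i, j. unfold vadd; simpl. split; lra. Qed.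

Definition zetaU (U : R * R) : R := pR * fst U / w - qR * snd U.
Definition unfold_pt (P D : R * R) : R * R := (sgn (fst D) * fst P, sgn (snd D) * snd P).

Lemma zeta_unfold P D : zeta P D = zetaU (unfold_pt P D).
Proof. unfold zeta, zetaU, unfold_pt; simpl. field. lra. Qed.

Lemma corner_congr z : multiple_gR z -> exists C, corner C /\ congr2g (zetaU C) z.
Proof.
  intros [m0 ->]. destruct pR_multiple as [p1 e1]. destruct qR_multiple as [q1 e2]. pose proof gR_pos as hgp.
  destruct (Z.Even_or_Odd m0) as [[z ez]|[z ez]].
  - exists (0, 0). split. unfold corner; simpl; tauto. exists (- z)%Z. rewrite ez, opp_IZR, mult_IZR.
    unfold zetaU; simpl. field. lra.
  - destruct (Z.Even_or_Odd p1) as [[z1 ez1]|[z1 ez1]].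
    + destruct (Z.Even_or_Odd q1) as [[z2 ez2]|[z2 ez2]].
      * exfalso. apply not_both_even_multiples. split; [exists z1|exists z2].
        rewrite e1, ez1, mult_IZR; simpl; ring. rewrite e2, ez2, mult_IZR; simpl; ring.
      * exists (0, 1). split. unfold corner; simpl; tauto. exists (- z2 - z - 1)%Z.
        unfold zetaU; simpl. rewrite e2, ez2, ez. rewrite !minus_IZR, opp_IZR, !plus_IZR, !mult_IZR. simpl. field. lra.
    + exists (w, 0). split. unfold corner; simpl; tauto. exists (z1 - z)%Z.
      unfold zetaU; simpl. rewrite e1, ez1, ez. rewrite !minus_IZR, !plus_IZR, !mult_IZR. simpl. field. lra.
Qed.

Lemma zetaU_add U V : zetaU (vadd U V) = zetaU U + zetaU V.
Proof. unfold zetaU, vadd; simpl. field. lra. Qed.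

Definition unit_dir : R * R := (hspeed, slope * hspeed).

Lemma zetaU_lin s U V : zetaU (vadd U (vscal s V)) = zetaU U + s * zetaU V.
Proof. unfold zetaU, vadd, vscal; simpl. field. lra. Qed.

Lemma zetaU_eq0_parallel V : zetaU V = 0 -> V = vscal (fst V / hspeed) unit_dir.
Proof.
  intros h. pose proof hspeed_pos. unfold zetaU in h. unfold vscal, unit_dir. destruct V as [x y]; simpl in *.
  pose proof pR_pos; pose proof qR_pos.
  f_equal. field; lra. unfold slope.
  assert (ey : y = pR * x / w / qR) by (field_simplify; try lra; apply (Rmult_eq_reg_l qR); [|lra]; field_simplify; lra).
  rewrite ey. field. repeat split; lra.
Qed.

Lemma unfold_pt_flight P D tau : sloped D -> unfold_pt (vadd P (vscal tau D)) D = vadd (unfold_pt P D) (vscal tau unit_dir).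
Proof.
  intros h. pose proof (sloped_abs_fst _ h) as a1. destruct h as [h1 _].
  unfold unfold_pt, vadd, vscal, unit_dir; simpl.
  assert (fst D <> 0) by (intro e; rewrite e, Rabs_R0 in a1; pose proof hspeed_pos; lra).
  assert (snd D <> 0) by (intro e; rewrite e, Rabs_R0, a1 in h1; pose proof hspeed_pos; pose proof slope_pos; nra).
  rewrite <- a1, <- h1, <- (sgn_mul_abs (fst D)), <- (sgn_mul_abs (snd D)) by auto. f_equal; ring.
Qed.

Lemma fold_unique (s s' X X' L : R) (i : Z) : 0 < L -> (s = 1 \/ s = -1) -> (s' = 1 \/ s' = -1) ->
  0 <= X <= L -> 0 <= X' <= L -> s * X = s' * X' + 2 * L * IZR i -> X = X' /\ (0 < X < L -> s = s').
Proof.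
  intros hL hs hs' hX hX' e.
  assert (hi : (-1 <= i <= 1)%Z).
  { split.
    - destruct (Z_lt_le_dec i (-1)) as [l|l]; auto. apply IZR_lt in l. exfalso.
      destruct hs as [->| ->]; destruct hs' as [->| ->]; nra.
    - destruct (Z_lt_le_dec 1 i) as [l|l]; auto. apply IZR_lt in l. exfalso.
      destruct hs as [->| ->]; destruct hs' as [->| ->]; nra. }
  assert (hi' : i = (-1)%Z \/ i = 0%Z \/ i = 1%Z) by lia.
  destruct hi' as [->|[->| ->]];
  [assert (ei : IZR (-1) = -1) by reflexivity|assert (ei : IZR 0 = 0) by reflexivity|assert (ei : IZR 1 = 1) by reflexivity];
  try rewrite ei in e;
  destruct hs as [->| ->]; destruct hs' as [->| ->]; split; intros; lra.
Qed.

Lemma unfold_pt_lat_inj P D P' D' : 0 <= fst P <= w -> 0 <= snd P <= 1 -> 0 <= fst P' <= w -> 0 <= snd P' <= 1 ->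
  lat_eq (unfold_pt P D) (unfold_pt P' D') -> P = P' /\ (0 < fst P < w -> sgn (fst D) = sgn (fst D')) /\
    (0 < snd P < 1 -> sgn (snd D) = sgn (snd D')).
Proof.
  intros h1 h2 h3 h4 (i & j & e1 & e2). unfold unfold_pt in *; simpl in *.
  destruct (fold_unique _ _ _ _ w i hw (sgn_pm _) (sgn_pm _) h1 h3 e1) as [x1 x2].
  assert (e2' : sgn (snd D) * snd P = sgn (snd D') * snd P' + 2 * 1 * IZR j) by lra.
  destruct (fold_unique _ _ _ _ 1 j ltac:(lra) (sgn_pm _) (sgn_pm _) h2 h4 e2') as [y1 y2].
  split; [destruct P, P'; simpl in *; subst; auto|]. split; auto.
Qed.

Lemma step_unfold_pt_lat x y i j t : step w x y i j t -> sloped (dir i (snd x)) ->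
  lat_eq (unfold_pt (bpos w (fst y)) (dir j (snd y))) (unfold_pt (bpos w (fst y)) (dir i (snd x))).
Proof.
  intros hs hg.
  pose proof (step_arrival_sign _ _ _ _ _ _ hw hs) as har.
  pose proof (bpos_on_edge _ _ _ hw (st_j _ _ _ _ _ _ hs)) as p2.
  rewrite (st_dir _ _ _ _ _ _ hs).
  pose proof (sloped_fst_neq0 _ hg) as n1. pose proof (sloped_snd_neq0 _ hg) as n2.
  assert (hj : (j < 4)%nat) by (eapply on_side_lt4; exact (st_j _ _ _ _ _ _ hs)).
  destruct (dir i (snd x)) as [a b]. destruct (bpos w (fst y)) as [X Y].
  unfold unfold_pt, mirror in *; simpl in *.
  destruct j as [|[|[|[|j]]]]; simpl in *; try lia; rewrite sgn_opp by auto; destruct p2 as [e _].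
  - exists 0%Z, 0%Z; simpl; split; subst; ring.
  - subst X. rewrite (sgn_pos a) by auto. exists (-1)%Z, 0%Z. simpl. split; ring.
  - subst Y. rewrite (sgn_pos b) by auto. exists 0%Z, (-1)%Z. simpl. split; ring.
  - exists 0%Z, 0%Z; simpl; split; subst; ring.
Qed.

Section Cylinder.
Variables (n : nat) (itin : nat -> nat) (A : nat -> R * R).
Hypothesis hA : in_cyl w n itin A.
Hypothesis hg : forall k, (k <= n)%nat -> sloped (dir (itin_at n itin k) (snd (A k))).

Definition apos k := bpos w (fst (A k)).
Definition adir k := dir (itin_at n itin k) (snd (A k)).
Definition aunf k := unfold_pt (apos k) (adir k).
Definition flight_time k := (fst (apos (S k)) - fst (apos k)) / fst (adir k).
Definition elapsed k := sumR flight_time k.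

Lemma cyl_step k : (k < n)%nat -> step w (A k) (A (S k)) (itin_at n itin k) (itin_at n itin (S k)) (flight_time k).
Proof.
  intros hk. destruct (orbit_step _ _ _ _ hw hA k hk) as [t hs].
  assert (e : t = flight_time k).
  { pose proof (st_pos _ _ _ _ _ _ hs) as ep. unfold flight_time, apos, adir. rewrite ep. unfold vadd, vscal; simpl.
    pose proof (sloped_fst_neq0 _ (hg k ltac:(lia))). field. auto. }
  subst t; auto.
Qed.

Lemma flight_time_pos k : (k < n)%nat -> 0 < flight_time k.
Proof. intros hk. exact (st_t _ _ _ _ _ _ (cyl_step k hk)). Qed.

Lemma aunf_succ k : (k < n)%nat -> lat_eq (aunf (S k)) (vadd (aunf k) (vscal (flight_time k) unit_dir)).
Proof.
  intros hk. pose proof (cyl_step k hk) as hs.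
  eapply lat_eq_trans. apply (step_unfold_pt_lat _ _ _ _ _ hs (hg k ltac:(lia))).
  rewrite (st_pos _ _ _ _ _ _ hs). rewrite unfold_pt_flight by (apply hg; lia). apply lat_eq_refl.
Qed.

Lemma aunf_elapsed k : (k <= n)%nat -> lat_eq (aunf k) (vadd (aunf O) (vscal (elapsed k) unit_dir)).
Proof.
  induction k; intros hk.
  - unfold elapsed; simpl. rewrite vadd_scal0. apply lat_eq_refl.
  - eapply lat_eq_trans. apply aunf_succ; lia.
    replace (vadd (aunf 0) (vscal (elapsed (S k)) unit_dir)) with (vadd (vadd (aunf 0) (vscal (elapsed k) unit_dir)) (vscal (flight_time k) unit_dir)).
    apply lat_eq_add. apply IHk; lia.
    unfold elapsed; simpl. unfold vadd, vscal; simpl. f_equal; ring.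
Qed.

Lemma aunf_period : aunf n = aunf O.
Proof.
  unfold aunf, apos, adir. rewrite itin_at_n, itin_at_0, (in_cyl_closed _ _ _ _ hA) by exact (in_cyl_period_pos _ _ _ _ hA).
  auto.
Qed.

Lemma elapsed_pos : 0 < elapsed n.
Proof.
  pose proof (in_cyl_period_pos _ _ _ _ hA) as h0. unfold elapsed.
  assert (e : n = S (n - 1)) by lia. rewrite e. simpl.
  pose proof (sumR_nonneg flight_time (n - 1) ltac:(intros; left; apply flight_time_pos; lia)). pose proof (flight_time_pos (n - 1) ltac:(lia)). lra.
Qed.

Lemma elapsed_lattice : exists i j : Z, elapsed n * hspeed = 2 * w * IZR i /\ elapsed n * (slope * hspeed) = 2 * IZR j.
Proof.
  pose proof (aunf_elapsed n ltac:(lia)) as h. rewrite aunf_period in h. destruct h as (i & j & e1 & e2).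
  exists (-i)%Z, (-j)%Z. unfold vadd, vscal, unit_dir in *; simpl in *. rewrite !opp_IZR. split; lra.
Qed.

Lemma elapsed_reduce s : exists s', 0 <= s' < elapsed n /\
  lat_eq (vadd (aunf O) (vscal s unit_dir)) (vadd (aunf O) (vscal s' unit_dir)).
Proof.
  pose proof elapsed_pos as hT. set (T := elapsed n) in *.
  set (N := (up (s / T) - 1)%Z).
  destruct (archimed (s / T)) as [a1 a2].
  assert (hN1 : IZR N <= s / T) by (unfold N; rewrite minus_IZR; simpl; lra).
  assert (hN2 : s / T < IZR N + 1) by (unfold N; rewrite minus_IZR; simpl; lra).
  exists (s - IZR N * T). split.
  - split.
    + apply (Rmult_le_compat_r T) in hN1; [|lra]. unfold Rdiv in hN1. rewrite Rmult_assoc, Rinv_l, Rmult_1_r in hN1; lra.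
    + apply (Rmult_lt_compat_r T) in hN2; [|lra]. unfold Rdiv in hN2. rewrite Rmult_assoc, Rinv_l, Rmult_1_r in hN2; lra.
  - destruct elapsed_lattice as (i & j & e1 & e2). fold T in e1, e2.
    exists (N * i)%Z, (N * j)%Z. rewrite !mult_IZR. unfold vadd, vscal, unit_dir; simpl.
    split. replace ((s - IZR N * T) * hspeed) with (s * hspeed - IZR N * (T * hspeed)) by ring. rewrite e1. ring.
    replace ((s - IZR N * T) * (slope * hspeed)) with (s * (slope * hspeed) - IZR N * (T * (slope * hspeed))) by ring. rewrite e2. ring.
Qed.

(** By Bezout the lattice shifts [zetaU] by every multiple of [2 gcd(p,q)], so a
    point whose [zetaU] is congruent to the orbit's lies, modulo the lattice, on the
    unfolded line of the orbit, which one period of the orbit traverses. *)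
Lemma unfolded_line_covered U : congr2g (zetaU U) (zetaU (aunf O)) ->
  exists k tau, (k < n)%nat /\ 0 <= tau < flight_time k /\ lat_eq U (unfold_pt (vadd (apos k) (vscal tau (adir k))) (adir k)).
Proof.
  intros [m em]. destruct bezout_gR as (al & be & eb).
  set (L := (2 * w * IZR al * IZR m, 2 * IZR be * IZR m)).
  set (V := vadd U (vscal (-1) (vadd (aunf O) L))).
  assert (zV : zetaU V = 0).
  { assert (zL : zetaU L = 2 * gR * IZR m) by (unfold zetaU, L; cbn [fst snd]; rewrite <- eb; field; lra).
    unfold V. rewrite zetaU_lin, zetaU_add, em, zL. ring. }
  pose proof (zetaU_eq0_parallel V zV) as eV. set (s := fst V / hspeed) in eV.
  assert (h1 : lat_eq U (vadd (aunf O) (vscal s unit_dir))).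
  { exists (al * m)%Z, (be * m)%Z. rewrite !mult_IZR. rewrite <- eV. unfold V, L, vadd, vscal; simpl. split; ring. }
  destruct (elapsed_reduce s) as (s' & hs' & h2).
  destruct (sumR_locate flight_time n s' flight_time_pos hs') as (k & hk & hl).
  exists k, (s' - elapsed k). split; auto. split. unfold elapsed; lra.
  rewrite unfold_pt_flight by (apply hg; lia). fold (aunf k).
  eapply lat_eq_trans. apply h1. eapply lat_eq_trans. apply h2.
  apply lat_eq_sym. eapply lat_eq_trans. apply lat_eq_add. apply aunf_elapsed. lia.
  replace (vadd (vadd (aunf 0) (vscal (elapsed k) unit_dir)) (vscal (s' - elapsed k) unit_dir)) with (vadd (aunf 0) (vscal s' unit_dir)).
  apply lat_eq_refl. unfold vadd, vscal; simpl. f_equal; ring.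
Qed.

Lemma segment_in_rect k tau : (k < n)%nat -> 0 <= tau < flight_time k ->
  0 <= fst (vadd (apos k) (vscal tau (adir k))) <= w /\ 0 <= snd (vadd (apos k) (vscal tau (adir k))) <= 1 /\
  (0 < tau -> Defs.interior w (vadd (apos k) (vscal tau (adir k)))).
Proof.
  intros hk ht. pose proof (cyl_step k hk) as hs. unfold apos, adir in *.
  destruct (Rle_lt_or_eq_dec 0 tau (proj1 ht)) as [l|e].
  - pose proof (st_int _ _ _ _ _ _ hs tau (conj l (proj2 ht))) as hi. unfold Defs.interior in hi.
    split; [|split]; try lra; intros; auto.
  - subst tau. rewrite vadd_scal0.
    pose proof (on_edge_rect _ _ _ hw (bpos_on_edge _ _ _ hw (st_i _ _ _ _ _ _ hs))). split; [|split]; try tauto. intros; lra.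
Qed.

Lemma point_in_zeta_class y iy : on_side w iy (fst y) -> - (PI/2) < snd y < PI/2 -> sloped (dir iy (snd y)) ->
  congr2g (zeta (bpos w (fst y)) (dir iy (snd y))) (zeta (apos O) (adir O)) -> exists k, (k < n)%nat /\ A k = y.
Proof.
  intros hy hth hgy hm. rewrite !zeta_unfold in hm. fold (aunf O) in hm.
  destruct (unfolded_line_covered _ hm) as (k & tau & hk & ht & heq).
  pose proof (on_edge_rect _ _ _ hw (bpos_on_edge _ _ _ hw hy)) as [r1 r2].
  destruct (segment_in_rect k tau hk ht) as (r3 & r4 & r5).
  destruct (unfold_pt_lat_inj _ _ _ _ r1 r2 r3 r4 heq) as (eP & sx & sy).
  pose proof (cyl_step k hk) as hs.
  assert (t0 : tau = 0).
  { destruct (Rle_lt_or_eq_dec 0 tau (proj1 ht)) as [l|e]; auto. exfalso.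
    apply (on_edge_not_interior w iy (bpos w (fst y))). apply bpos_on_edge; auto. rewrite eP. auto. }
  subst tau. rewrite vadd_scal0 in *.
  assert (ei : iy = itin_at n itin k).
  { apply (on_edge_unique w iy (itin_at n itin k) (bpos w (fst y)) hw (bpos_on_edge _ _ _ hw hy)). rewrite eP. unfold apos.
    apply bpos_on_edge; auto. exact (st_i _ _ _ _ _ _ hs). }
  subst iy.
  assert (es : fst y = fst (A k)) by (eapply bpos_inj; eauto; exact (st_i _ _ _ _ _ _ hs)).
  exists k; split; auto.
  assert (hik : (itin_at n itin k < 4)%nat) by (eapply on_side_lt4; eauto).
  assert (thk : - (PI/2) < snd (A k) < PI/2) by exact (st_thx _ _ _ _ _ _ hs).
  assert (eD : dir (itin_at n itin k) (snd y) = adir k).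
  { unfold adir. destruct (dir_sgn_on_edge w _ _ _ _ (bpos_on_edge _ _ _ hw hy) hth thk sx sy) as [e1 e2].
    apply sloped_eq_of_sgn; auto. apply hg; lia. }
  unfold adir in eD. apply dir_inj in eD; auto.
  destruct y, (A k); simpl in *; subst; auto.
Qed.

Lemma zeta_not_multiple : ~ multiple_gR (zeta (apos O) (adir O)).
Proof.
  intros hz. rewrite zeta_unfold in hz. fold (aunf O) in hz.
  destruct (corner_congr _ hz) as (C & hC & hm).
  destruct (unfolded_line_covered _ hm) as (k & tau & hk & ht & heq).
  destruct (segment_in_rect k tau hk ht) as (r3 & r4 & r5).
  replace C with (unfold_pt C (1, 1)) in heq by (unfold unfold_pt; simpl; rewrite sgn_pos by lra; destruct C; simpl; f_equal; ring).
  assert (rc : 0 <= fst C <= w /\ 0 <= snd C <= 1) by (destruct hC as [[h|h] [h'|h']]; rewrite h, h'; lra).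
  destruct (unfold_pt_lat_inj _ _ _ _ (proj1 rc) (proj2 rc) r3 r4 heq) as (eP & _ & _).
  destruct (Rle_lt_or_eq_dec 0 tau (proj1 ht)) as [l|e].
  - pose proof (r5 l) as hi. rewrite <- eP in hi. unfold Defs.interior in hi.
    destruct hC as [[h|h] [h'|h']]; rewrite ?h, ?h' in hi; lra.
  - subst tau. rewrite vadd_scal0 in eP.
    pose proof (bpos_on_edge _ _ _ hw (st_i _ _ _ _ _ _ (cyl_step k hk))) as po. fold (apos k) in po. rewrite <- eP in po.
    destruct hC as [[h|h] [h'|h']]; destruct C as [X Y]; simpl in *; subst;
    destruct (itin_at n itin k) as [|[|[|[|]]]]; simpl in po; lra.
Qed.

Lemma interval_exit X a L : 0 < X < L -> ~ (0 < X + a < L) ->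
  exists lam, 0 < lam <= 1 /\ (X + lam * a = 0 \/ X + lam * a = L).
Proof.
  intros hX hn. destruct (Rle_dec (X + a) 0).
  - exists (X / - a). assert (a < 0) by lra. split; [split|left; field; lra].
    + apply Rdiv_lt_0_compat; lra.
    + apply (Rmult_le_reg_r (- a)); [lra|]. field_simplify; lra.
  - assert (L <= X + a) by (destruct (Rle_dec L (X + a)); auto; exfalso; apply hn; lra).
    exists ((L - X) / a). assert (0 < a) by lra. split; [split|right; field; lra].
    + apply Rdiv_lt_0_compat; lra.
    + apply (Rmult_le_reg_r a); [lra|]. field_simplify; lra.
Qed.

Lemma edge_shift_corner i P v : on_edge w i P -> (Nat.even i = true -> snd v = 0) -> (Nat.even i = false -> fst v = 0) ->
  ~ on_edge w i (vadd P v) -> exists lam, 0 < lam <= 1 /\ corner (vadd P (vscal lam v)).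
Proof.
  intros hP h1 h2 hn. destruct P as [X Y], v as [a b]. unfold corner, vadd, vscal in *; simpl in *.
  destruct i as [|[|[|[|i]]]]; simpl in *; try contradiction.
  - specialize (h1 eq_refl). subst b. destruct hP as [-> hP].
    destruct (interval_exit X a w hP) as (lam & hl & he); [intros ?; apply hn; split; lra|].
    exists lam. split; [exact hl|split; [destruct he; [left|right]; lra|left; lra]].
  - specialize (h2 eq_refl). subst a. destruct hP as [-> hP].
    destruct (interval_exit Y b 1 hP) as (lam & hl & he); [intros ?; apply hn; split; lra|].
    exists lam. split; [exact hl|split; [right; lra|destruct he; [left|right]; lra]].
  - specialize (h1 eq_refl). subst b. destruct hP as [-> hP].
    destruct (interval_exit X a w hP) as (lam & hl & he); [intros ?; apply hn; split; lra|].
    exists lam. split; [exact hl|split; [destruct he; [left|right]; lra|right; lra]].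
  - specialize (h2 eq_refl). subst a. destruct hP as [-> hP].
    destruct (interval_exit Y b 1 hP) as (lam & hl & he); [intros ?; apply hn; split; lra|].
    exists lam. split; [exact hl|split; [left; lra|destruct he; [left|right]; lra]].
Qed.

Lemma orbit_zeta_congr k : (k <= n)%nat -> congr2g (zeta (apos k) (adir k)) (zeta (apos O) (adir O)).
Proof.
  induction k; intros hk; [apply congr2g_refl|].
  pose proof (cyl_step k ltac:(lia)) as hs. unfold apos, adir in *.
  rewrite (zeta_step _ _ _ _ _ hs (hg k ltac:(lia))).
  destruct (zeta_jump_congr (itin_at n itin (S k))) as [z ez].
  eapply congr2g_trans; [|apply IHk; lia]. exists z. lra.
Qed.

(** Moving each collision point along its side by [eps * shift_dir] raises [zeta] by
    [eps], and yields a parallel orbit as long as the points stay on their sides. *)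
Definition shift_dir k : R * R := if Nat.even (itin_at n itin k) then (w * sgn (fst (adir k)) / pR, 0) else (0, - sgn (snd (adir k)) / qR).
Definition shift_pos (eps : R) k : R * R := vadd (apos k) (vscal eps (shift_dir k)).

Lemma zeta_lin P v D : zeta (vadd P v) D = zeta P D + (pR * sgn (fst D) * fst v / w - qR * sgn (snd D) * snd v).
Proof. unfold zeta, vadd; simpl. field. lra. Qed.

Lemma zeta_add_shift_dir P D eps k :
  (Nat.even (itin_at n itin k) = true -> sgn (fst D) = sgn (fst (adir k))) ->
  (Nat.even (itin_at n itin k) = false -> sgn (snd D) = sgn (snd (adir k))) ->
  zeta (vadd P (vscal eps (shift_dir k))) D = zeta P D + eps.
Proof.
  intros h1 h2. rewrite zeta_lin. pose proof pR_pos; pose proof qR_pos. unfold shift_dir, vscal.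
  destruct (Nat.even (itin_at n itin k)); cbn [fst snd]; [rewrite (h1 eq_refl)|rewrite (h2 eq_refl)].
  - pose proof (sgn_sq (fst (adir k))) as e. set (u := sgn (fst (adir k))) in *. clearbody u.
    field_simplify; try lra. replace (u ^ 2) with 1 by (rewrite <- e; ring). field; lra.
  - pose proof (sgn_sq (snd (adir k))) as e. set (u := sgn (snd (adir k))) in *. clearbody u.
    field_simplify; try lra. replace (u ^ 2) with 1 by (rewrite <- e; ring). field; lra.
Qed.

Lemma zeta_shift_pos eps k : zeta (shift_pos eps k) (adir k) = zeta (apos k) (adir k) + eps.
Proof. apply zeta_add_shift_dir; auto. Qed.

Lemma zeta_shift_pos_prev eps k : (k < n)%nat -> zeta (shift_pos eps (S k)) (adir k) = zeta (apos (S k)) (adir k) + eps.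
Proof.
  intros hk. apply zeta_add_shift_dir; intros he;
  rewrite (st_dir _ _ _ _ _ _ (cyl_step k hk) : adir (S k) = _); unfold mirror; rewrite he; auto.
Qed.

Lemma parallel_of_zeta P P' D : sloped D -> zeta P' D = zeta P D ->
  P' = vadd P (vscal ((fst P' - fst P) / fst D) D).
Proof.
  intros hgD e. pose proof (sloped_fst_neq0 _ hgD) as n1. pose proof (sloped_snd_neq0 _ hgD) as n2.
  pose proof (sloped_abs_fst _ hgD) as a1. destruct hgD as [h1 _].
  unfold zeta in e. destruct P as [X Y], P' as [X' Y'], D as [a b]. unfold vadd, vscal; simpl in *.
  pose proof pR_pos; pose proof qR_pos. pose proof hspeed_pos.
  assert (ea : a = sgn a * hspeed) by (rewrite <- a1; apply sgn_abs; auto).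
  assert (eb : b = sgn b * (slope * hspeed)) by (rewrite <- a1, <- h1; apply sgn_abs; auto).
  pose proof (sgn_sq a) as sa2. pose proof (sgn_sq b) as sb2. pose proof (sgn_pm a) as pa. pose proof (sgn_pm b) as pb.
  set (sa := sgn a) in *. set (sb := sgn b) in *. clearbody sa sb.
  assert (e2 : qR * sb * (Y' - Y) = pR * sa * (X' - X) / w).
  { unfold Rdiv in *. apply (Rplus_eq_reg_r (qR * sb * Y - pR * sa * X' * / w)). ring_simplify. lra. }
  assert (e3 : Y' - Y = slope * sa * sb * (X' - X)).
  { unfold slope. apply (Rmult_eq_reg_l (qR * sb)). 2: intro z; apply Rmult_integral in z; destruct z; subst; lra.
    rewrite e2. destruct pb as [-> | ->]; field; lra. }
  f_equal. field; auto.
  rewrite eb, ea. replace Y' with (Y + (Y' - Y)) by ring. rewrite e3.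
  destruct pa as [-> | ->]; field; lra.
Qed.

Definition shifted (eps : R) k : R * R := (arc_of w (itin_at n itin k) (shift_pos eps k), snd (A k)).
Definition shift_valid (eps : R) : Prop := forall k, (k < n)%nat -> on_edge w (itin_at n itin k) (shift_pos eps k).

Lemma shift_pos_period eps : shift_pos eps n = shift_pos eps O.
Proof.
  pose proof (in_cyl_period_pos _ _ _ _ hA) as h0.
  unfold shift_pos, shift_dir, apos, adir. rewrite itin_at_n, itin_at_0, (in_cyl_closed _ _ _ _ hA) by auto. auto.
Qed.

Lemma shift_valid_le eps k : shift_valid eps -> (k <= n)%nat -> on_edge w (itin_at n itin k) (shift_pos eps k).
Proof.
  intros hv hk. destruct (Nat.eq_dec k n) as [e|e].
  - subst k. rewrite shift_pos_period, itin_at_n. rewrite <- (itin_at_0 n itin) by (apply (in_cyl_period_pos _ _ _ _ hA)). apply hv. apply (in_cyl_period_pos _ _ _ _ hA).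
  - apply hv; lia.
Qed.

Lemma shifted_in_cyl eps : shift_valid eps -> in_cyl w n itin (shifted eps).
Proof.
  intros hv. pose proof (in_cyl_period_pos _ _ _ _ hA) as h0. split; [auto|split; [|split]].
  - intros k hk. pose proof (cyl_step k hk) as hs.
    destruct (arc_ofP w _ _ hw (shift_valid_le eps k hv ltac:(lia))) as [o1 b1].
    destruct (arc_ofP w _ _ hw (shift_valid_le eps (S k) hv ltac:(lia))) as [o2 b2].
    apply (Bill_of_chord w _ _ (itin_at n itin k) (itin_at n itin (S k)) ((fst (shift_pos eps (S k)) - fst (shift_pos eps k)) / fst (adir k))); auto.
    + exact (step_sides_neq _ _ _ _ _ _ hw hs).
    + exact (st_thx _ _ _ _ _ _ hs).
    + exact (st_thy _ _ _ _ _ _ hs).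
    + unfold shifted; cbn [fst snd]. rewrite b1, b2. fold (adir k). apply parallel_of_zeta. apply hg; lia.
      rewrite zeta_shift_pos_prev, zeta_shift_pos by auto. unfold apos at 1. rewrite (st_pos _ _ _ _ _ _ hs).
      rewrite zeta_flight by (apply hg; lia). auto.
    + unfold shifted; cbn [fst snd]. exact (st_dir _ _ _ _ _ _ hs).
  - unfold shifted. rewrite shift_pos_period, itin_at_n, itin_at_0, (in_cyl_closed _ _ _ _ hA) by auto. auto.
  - intros k hk. unfold shifted; simpl. destruct (arc_ofP w _ _ hw (hv k hk)) as [o1 _]. rewrite itin_at_lt in * by auto; auto.
Qed.

Lemma shifted_snd eps k : snd (shifted eps k) = snd (A k).
Proof. reflexivity. Qed.

Lemma bpos_shifted eps k : shift_valid eps -> (k <= n)%nat -> bpos w (fst (shifted eps k)) = shift_pos eps k.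
Proof. intros hv hk. unfold shifted; simpl. destruct (arc_ofP w _ _ hw (shift_valid_le eps k hv hk)); auto. Qed.

(** No corner is reached while [zeta] stays strictly between two multiples of [gcd(p,q)]. *)
Lemma shift_valid_of_interval z m : gR * IZR m < zeta (apos O) (adir O) < gR * (IZR m + 1) ->
  gR * IZR m < z < gR * (IZR m + 1) -> shift_valid (z - zeta (apos O) (adir O)).
Proof.
  intros h1 h2 k hk. set (eps := z - zeta (apos 0) (adir 0)).
  destruct (classic (on_edge w (itin_at n itin k) (shift_pos eps k))) as [h|h]; auto. exfalso.
  pose proof (cyl_step k hk) as hs.
  assert (hP : on_edge w (itin_at n itin k) (apos k)) by (apply bpos_on_edge; auto; exact (st_i _ _ _ _ _ _ hs)).
  destruct (edge_shift_corner _ _ (vscal eps (shift_dir k)) hP) as (lam & hl & hc).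
  - intros e. unfold shift_dir, vscal. rewrite e. simpl. ring.
  - intros e. unfold shift_dir, vscal. rewrite e. simpl. ring.
  - exact h.
  - assert (ec : vadd (apos k) (vscal lam (vscal eps (shift_dir k))) = shift_pos (lam * eps) k).
    { unfold shift_pos, vadd, vscal; simpl. f_equal; ring. }
    rewrite ec in hc. pose proof (zeta_corner _ (adir k) hc) as hz. rewrite zeta_shift_pos in hz.
    assert (hm : congr2g (zeta (apos k) (adir k) + lam * eps) (zeta (apos O) (adir O) + lam * eps)).
    { apply congr2g_add. apply orbit_zeta_congr; lia. }
    pose proof (multiple_gR_congr _ _ (congr2g_sym _ _ hm) hz) as hz2.
    apply (multiple_gR_not_between _ m hz2). unfold eps in *.
    destruct (Rle_dec z (zeta (apos 0) (adir 0))); split; nra.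
Qed.

Lemma zeta_in_interval : exists m : Z, gR * IZR m < zeta (apos O) (adir O) < gR * (IZR m + 1).
Proof.
  pose proof gR_pos as hg0. set (z := zeta (apos 0) (adir 0)).
  destruct (archimed (z / gR)) as [a1 a2].
  exists (up (z / gR) - 1)%Z. rewrite minus_IZR. simpl.
  assert (b1 : gR * (IZR (up (z / gR)) - 1) <= z).
  { replace z with (gR * (z / gR)) at 2 by (field; lra). apply Rmult_le_compat_l; lra. }
  assert (b2 : z < gR * (IZR (up (z / gR)) - 1 + 1)).
  { replace z with (gR * (z / gR)) at 1 by (field; lra). apply Rmult_lt_compat_l; lra. }
  split; auto. destruct (Rle_lt_or_eq_dec _ _ b1) as [l|e]; auto. exfalso. apply zeta_not_multiple.
  fold z. exists (up (z / gR) - 1)%Z. rewrite minus_IZR. simpl. lra.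
Qed.

End Cylinder.

Lemma cyl_set_of_zeta_congr n itin A y iy m d : in_cyl w n itin A -> (forall k, (k <= n)%nat -> sloped (dir (itin_at n itin k) (snd (A k)))) ->
  gR * IZR m < zeta (apos A O) (adir n itin A O) < gR * (IZR m + 1) ->
  on_side w iy (fst y) -> - (PI/2) < snd y < PI/2 -> sloped (dir iy (snd y)) ->
  gR * IZR (m + 2 * d) < zeta (bpos w (fst y)) (dir iy (snd y)) < gR * (IZR (m + 2 * d) + 1) ->
  cyl_set w n itin y.
Proof.
  intros hA hg hm hy hth hgy hd.
  set (zy := zeta (bpos w (fst y)) (dir iy (snd y))) in *.
  set (z := zy - 2 * gR * IZR d).
  assert (hz : gR * IZR m < z < gR * (IZR m + 1)).
  { unfold z. rewrite plus_IZR, mult_IZR in hd. simpl in hd. lra. }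
  pose proof (shift_valid_of_interval n itin A hA hg z m hm hz) as hv.
  set (eps := z - zeta (apos A 0) (adir n itin A 0)) in hv.
  pose proof (shifted_in_cyl n itin A hA hg eps hv) as hA'.
  assert (hg' : forall k, (k <= n)%nat -> sloped (dir (itin_at n itin k) (snd (shifted n itin A eps k)))).
  { intros k hk. rewrite shifted_snd. auto. }
  destruct (point_in_zeta_class n itin (shifted n itin A eps) hA' hg' y iy hy hth hgy) as (k & hk & e).
  - unfold apos at 1, adir at 1. rewrite bpos_shifted by (auto; lia). rewrite shifted_snd. fold (adir n itin A 0).
    rewrite zeta_shift_pos. unfold eps. exists d. fold zy. unfold z. ring.
  - exists (shifted n itin A eps), k. auto.
Qed.

Lemma zeta_inj_on_edge i P P' D : on_edge w i P -> on_edge w i P' -> zeta P D = zeta P' D -> P = P'.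
Proof.
  intros h h' e. unfold zeta in e. pose proof pR_pos; pose proof qR_pos.
  pose proof (sgn_pm (fst D)) as s1. pose proof (sgn_pm (snd D)) as s2.
  destruct P as [X Y], P' as [X' Y']. simpl in *.
  destruct i as [|[|[|[|i]]]]; simpl in *; try contradiction; destruct h as [h1 _], h' as [h1' _]; subst;
  f_equal; auto;
  [destruct s1 as [s1|s1] | destruct s2 as [s2|s2] | destruct s1 as [s1|s1] | destruct s2 as [s2|s2]];
  rewrite s1 in e || rewrite s2 in e;
  try (apply (Rmult_eq_reg_l pR); [|lra]; apply (Rmult_eq_reg_r (/ w)); [|apply Rinv_neq_0_compat; lra]; unfold Rdiv in e; lra);
  try (apply (Rmult_eq_reg_l qR); lra).
Qed.

(** * Cylinders sharing a point coincide *)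

Definition step_seq (u : nat -> R * R) (s : nat -> nat) : Prop :=
  forall m, exists t, step w (u m) (u (S m)) (s m) (s (S m)) t.

Lemma step_seq_shift u s c : step_seq u s -> step_seq (fun m => u (c + m)%nat) (fun m => s (c + m)%nat).
Proof. intros h m. rewrite Nat.add_succ_r. apply h. Qed.

Lemma step_seq_side u s m : step_seq u s -> on_side w (s m) (fst (u m)).
Proof. intros h. destruct (h m) as [t st]. exact (st_i _ _ _ _ _ _ st). Qed.

Lemma step_seq_angle u s m : step_seq u s -> - (PI/2) < snd (u m) < PI/2.
Proof. intros h. destruct (h m) as [t st]. exact (st_thx _ _ _ _ _ _ st). Qed.

Lemma step_seq_sync u s v s' k l : step_seq u s -> step_seq v s' -> u k = v l -> forall m, u (k + m)%nat = v (l + m)%nat.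
Proof.
  intros hu hv e. induction m; [rewrite !Nat.add_0_r; auto|].
  rewrite !Nat.add_succ_r. destruct (hu (k + m)%nat) as [t1 s1]. destruct (hv (l + m)%nat) as [t2 s2].
  apply step_Bill in s1, s2. rewrite IHm in s1. exact (Bill_det _ _ _ _ hw s1 s2).
Qed.

Lemma step_seq_sync_sides u s v s' k l : step_seq u s -> step_seq v s' ->
  (forall m, u (k + m)%nat = v (l + m)%nat) -> forall m, s (k + m)%nat = s' (l + m)%nat.
Proof.
  intros hu hv e m. apply (on_side_unique w _ _ (fst (u (k + m)%nat)) hw (step_seq_side u s _ hu)).
  rewrite e. apply step_seq_side; auto.
Qed.

Lemma Nat_mod_succ n m : (0 < n)%nat -> ((S m) mod n = if (S (m mod n) =? n) then O else S (m mod n))%nat.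
Proof.
  intros hn. pose proof (Nat.mod_upper_bound m n ltac:(lia)) as hb.
  replace (S m) with (m + 1)%nat by lia. rewrite <- Nat.Div0.add_mod_idemp_l.
  destruct (Nat.eqb_spec (S (m mod n)) n) as [e|e].
  - replace (m mod n + 1)%nat with n by lia. apply Nat.Div0.mod_same.
  - rewrite Nat.mod_small by lia. lia.
Qed.

Lemma in_cyl_step_seq n itin A : in_cyl w n itin A ->
  step_seq (fun m => A (m mod n)%nat) (fun m => itin (m mod n)%nat).
Proof.
  intros hA m. pose proof (in_cyl_period_pos _ _ _ _ hA) as h0.
  pose proof (Nat.mod_upper_bound m n ltac:(lia)) as hb.
  destruct (orbit_step _ _ _ _ hw hA (m mod n) hb) as [t hs]. exists t.
  rewrite itin_at_lt in hs by auto. rewrite (Nat_mod_succ n m h0).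
  destruct (Nat.eqb_spec (S (m mod n)) n) as [e|e].
  - rewrite e, itin_at_n, (in_cyl_closed _ _ _ _ hA) in hs. auto.
  - rewrite itin_at_lt in hs by lia. auto.
Qed.

Lemma in_cyl_of_step_seq u s N itin' : step_seq u s -> (0 < N)%nat -> u N = u O ->
  (forall m, (m < N)%nat -> itin' m = s m) -> in_cyl w N itin' u.
Proof.
  intros hu hN hper hs. split; auto. split; [|split]; auto.
  - intros m hm. destruct (hu m) as [t st]. exact (step_Bill _ _ _ _ _ _ st).
  - intros m hm. rewrite hs by auto. apply step_seq_side; auto.
Qed.

Lemma cyl_set_of_step_seq u s N itin' : step_seq u s -> in_cyl w N itin' u -> forall M, cyl_set w N itin' (u M).
Proof.
  intros hu hc M. pose proof (in_cyl_period_pos _ _ _ _ hc) as hN.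
  assert (per : forall c r, u (r + c * N)%nat = u r).
  { induction c; intros r; [rewrite Nat.mul_0_l, Nat.add_0_r; auto|].
    pose proof (step_seq_sync u s u s N O hu hu (in_cyl_closed _ _ _ _ hc) (r + c * N)) as e.
    rewrite Nat.add_0_l in e. replace (r + S c * N)%nat with (N + (r + c * N))%nat by lia. rewrite e. apply IHc. }
  exists u, (M mod N)%nat. split; auto. split; [apply Nat.mod_upper_bound; lia|].
  rewrite (Nat.div_mod_eq M N) at 2. rewrite Nat.add_comm, Nat.mul_comm, per. auto.
Qed.

Section SignMemory.
Variables (u : nat -> R * R) (s : nat -> nat).
Hypothesis hu : step_seq u s.

Local Notation D m := (dir (s m) (snd (u m))).

Lemma arrival_sgn_fst m : Nat.even (s (S m)) = false -> sgn (fst (D m)) = if (s (S m) =? 1)%nat then 1 else -1.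
Proof.
  intros he. destruct (hu m) as [t hs]. pose proof (step_arrival_sign _ _ _ _ _ _ hw hs) as ha.
  pose proof (step_dst_lt4 _ _ _ _ _ _ hs) as hj.
  destruct (s (S m)) as [|[|[|[|]]]]; simpl in *; try discriminate; try lia.
  - apply sgn_pos; auto.
  - apply sgn_neg; auto.
Qed.

Lemma arrival_sgn_snd m : Nat.even (s (S m)) = true -> sgn (snd (D m)) = if (s (S m) =? 2)%nat then 1 else -1.
Proof.
  intros he. destruct (hu m) as [t hs]. pose proof (step_arrival_sign _ _ _ _ _ _ hw hs) as ha.
  pose proof (step_dst_lt4 _ _ _ _ _ _ hs) as hj.
  destruct (s (S m)) as [|[|[|[|]]]]; simpl in *; try discriminate; try lia.
  - apply sgn_neg; auto.
  - apply sgn_pos; auto.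
Qed.

Lemma fst_dir_keep m : Nat.even (s (S m)) = true -> fst (D (S m)) = fst (D m).
Proof. intros he. destruct (hu m) as [t hs]. rewrite (st_dir _ _ _ _ _ _ hs). unfold mirror. rewrite he. auto. Qed.

Lemma snd_dir_keep m : Nat.even (s (S m)) = false -> snd (D (S m)) = snd (D m).
Proof. intros he. destruct (hu m) as [t hs]. rewrite (st_dir _ _ _ _ _ _ hs). unfold mirror. rewrite he. auto. Qed.

(** The direction of the horizontal (resp. vertical) motion is read off the next
    vertical (resp. horizontal) side in the itinerary. *)
Lemma dir_sgn_fst_eq d : forall m m', (forall i, (i <= S d)%nat -> s (m + i)%nat = s (m' + i)%nat) ->
  Nat.even (s (m + S d)%nat) = false -> sgn (fst (D m)) = sgn (fst (D m')).
Proof.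
  induction d; intros m m' hs he.
  - pose proof (hs 1%nat ltac:(lia)) as e1. rewrite !Nat.add_1_r in e1. rewrite Nat.add_1_r in he.
    rewrite (arrival_sgn_fst m he), (arrival_sgn_fst m'); rewrite <- ?e1; auto.
  - pose proof (hs 1%nat ltac:(lia)) as e1. rewrite !Nat.add_1_r in e1.
    destruct (Nat.even (s (S m))) eqn:E.
    + rewrite <- (fst_dir_keep m E), <- (fst_dir_keep m') by (rewrite <- e1; auto).
      apply IHd; [intros i hi; rewrite !Nat.add_succ_comm; apply hs; lia|].
      rewrite Nat.add_succ_comm; auto.
    + rewrite (arrival_sgn_fst m E), (arrival_sgn_fst m'); rewrite <- ?e1; auto.
Qed.

Lemma dir_sgn_snd_eq d : forall m m', (forall i, (i <= S d)%nat -> s (m + i)%nat = s (m' + i)%nat) ->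
  Nat.even (s (m + S d)%nat) = true -> sgn (snd (D m)) = sgn (snd (D m')).
Proof.
  induction d; intros m m' hs he.
  - pose proof (hs 1%nat ltac:(lia)) as e1. rewrite !Nat.add_1_r in e1. rewrite Nat.add_1_r in he.
    rewrite (arrival_sgn_snd m he), (arrival_sgn_snd m'); rewrite <- ?e1; auto.
  - pose proof (hs 1%nat ltac:(lia)) as e1. rewrite !Nat.add_1_r in e1.
    destruct (Nat.even (s (S m))) eqn:E.
    + rewrite (arrival_sgn_snd m E), (arrival_sgn_snd m'); rewrite <- ?e1; auto.
    + rewrite <- (snd_dir_keep m E), <- (snd_dir_keep m') by (rewrite <- e1; auto).
      apply IHd; [intros i hi; rewrite !Nat.add_succ_comm; apply hs; lia|].
      rewrite Nat.add_succ_comm; auto.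
Qed.

End SignMemory.

Definition seq_zeta (u : nat -> R * R) (s : nat -> nat) (m : nat) : R :=
  zeta (bpos w (fst (u m))) (dir (s m) (snd (u m))).

Lemma seq_zeta_same_sides u v s : step_seq u s -> step_seq v s ->
  (forall m, sloped (dir (s m) (snd (u m)))) -> (forall m, sloped (dir (s m) (snd (v m)))) ->
  forall m0 m, seq_zeta u s (m0 + m)%nat - seq_zeta u s m0 = seq_zeta v s (m0 + m)%nat - seq_zeta v s m0.
Proof.
  intros hu hv gu gv m0. induction m; [rewrite Nat.add_0_r; ring|].
  rewrite Nat.add_succ_r. destruct (hu (m0 + m)%nat) as [t1 s1]. destruct (hv (m0 + m)%nat) as [t2 s2].
  unfold seq_zeta in *. rewrite (zeta_step _ _ _ _ _ s1), (zeta_step _ _ _ _ _ s2); auto. lra.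
Qed.

(** Side, [zeta] and direction determine a phase point; when both parities occur
    in the itinerary the direction is determined by the itinerary. *)
Lemma step_seq_return u s m0 N : step_seq u s -> (forall m, sloped (dir (s m) (snd (u m)))) ->
  (forall i, s (m0 + N + i)%nat = s (m0 + i)%nat) ->
  (forall m, exists d, Nat.even (s (m + S d)%nat) = false) -> (forall m, exists d, Nat.even (s (m + S d)%nat) = true) ->
  seq_zeta u s (m0 + N)%nat = seq_zeta u s m0 -> u (m0 + N)%nat = u m0.
Proof.
  intros hu hsl hs hodd hev hz.
  pose proof (hs O) as h0. rewrite !Nat.add_0_r in h0.
  assert (eD : dir (s (m0 + N)%nat) (snd (u (m0 + N)%nat)) = dir (s m0) (snd (u m0))).
  { destruct (hodd (m0 + N)%nat) as [d1 hd1]. destruct (hev (m0 + N)%nat) as [d2 hd2].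
    apply sloped_eq_of_sgn; auto.
    - apply (dir_sgn_fst_eq u s hu d1); auto.
    - apply (dir_sgn_snd_eq u s hu d2); auto. }
  rewrite h0 in eD.
  pose proof (step_seq_side u s (m0 + N) hu) as o1. rewrite h0 in o1. pose proof (step_seq_side u s m0 hu) as o2.
  assert (hP : bpos w (fst (u (m0 + N)%nat)) = bpos w (fst (u m0))).
  { apply (zeta_inj_on_edge (s m0) _ _ (dir (s m0) (snd (u m0)))); try (apply bpos_on_edge; auto).
    unfold seq_zeta in hz. rewrite h0, eD in hz. exact hz. }
  apply (bpos_inj w (s m0)) in hP; auto.
  apply dir_inj in eD; [|eapply on_side_lt4; eauto|apply (step_seq_angle u s); auto..].
  destruct (u (m0 + N)%nat), (u m0); simpl in *; subst; auto.
Qed.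

Lemma mod_hit n k0 m : (0 < n)%nat -> (k0 < n)%nat -> exists d, ((m + S d) mod n = k0)%nat.
Proof.
  intros h0 hk. exists ((n - 1) * (m + 1) + k0)%nat.
  replace (m + S ((n - 1) * (m + 1) + k0))%nat with (k0 + (m + 1) * n)%nat by nia.
  rewrite Nat.Div0.mod_add. apply Nat.mod_small; auto.
Qed.

Lemma in_cyl_align n itin a n' itin' a' k l : in_cyl w n itin a -> in_cyl w n' itin' a' ->
  (k < n)%nat -> (l < n')%nat -> a k = a' l ->
  exists s0, forall m, a ((s0 + m) mod n)%nat = a' (m mod n')%nat.
Proof.
  intros ha ha' hk hl e.
  pose proof (in_cyl_period_pos _ _ _ _ ha) as n0. pose proof (in_cyl_period_pos _ _ _ _ ha') as n0'.
  pose proof (step_seq_sync _ _ _ _ k l (in_cyl_step_seq _ _ _ ha) (in_cyl_step_seq _ _ _ ha')) as hsync.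
  cbv beta in hsync. rewrite !Nat.mod_small in hsync by auto. specialize (hsync e).
  exists (k + n * n' - l)%nat. intros m. specialize (hsync (m + n * n' - l)%nat).
  replace (k + (m + n * n' - l))%nat with (k + n * n' - l + m)%nat in hsync by nia.
  rewrite hsync. replace (l + (m + n * n' - l))%nat with (m + n * n')%nat by nia.
  rewrite Nat.Div0.mod_add. auto.
Qed.

Lemma cyl_set_share_sub n itin n' itin' x :
  (forall B, in_cyl w n itin B -> forall k, (k <= n)%nat -> sloped (dir (itin_at n itin k) (snd (B k)))) ->
  (exists k0, (k0 < n)%nat /\ Nat.even (itin k0) = false) ->
  (exists k1, (k1 < n)%nat /\ Nat.even (itin k1) = true) ->
  cyl_set w n itin x -> cyl_set w n' itin' x ->
  forall y, cyl_set w n itin y -> cyl_set w n' itin' y.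
Proof.
  intros hgX [k0 [hk0 ek0]] [k1 [hk1 ek1]] (a & k & ha & hk & ex) (a' & l & ha' & hl & ex') y (b & i & hb & hi & ey).
  pose proof (in_cyl_period_pos _ _ _ _ ha) as n0. pose proof (in_cyl_period_pos _ _ _ _ ha') as n0'.
  destruct (in_cyl_align _ _ _ _ _ _ _ _ ha ha' hk hl (eq_trans ex (eq_sym ex'))) as [s0 e2].
  set (ae := fun m => a (m mod n)%nat). set (be := fun m => b (m mod n)%nat). set (sx := fun m => itin (m mod n)%nat).
  assert (sta : step_seq ae sx) by exact (in_cyl_step_seq _ _ _ ha).
  assert (stb : step_seq be sx) by exact (in_cyl_step_seq _ _ _ hb).
  pose proof (in_cyl_step_seq _ _ _ ha') as sta'.
  assert (e3 : forall m, ae (s0 + n' + m)%nat = ae (s0 + m)%nat).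
  { intros m. unfold ae. rewrite <- Nat.add_assoc, e2, e2.
    replace (n' + m)%nat with (m + 1 * n')%nat by lia. rewrite Nat.Div0.mod_add. auto. }
  pose proof (step_seq_sync_sides _ _ _ _ _ _ sta sta e3) as e5.
  pose proof (step_seq_sync_sides _ _ _ _ s0 O sta sta' e2) as e4. cbv beta in e4.
  assert (hsl : forall c, in_cyl w n itin c -> forall m, sloped (dir (sx m) (snd (c (m mod n)%nat)))).
  { intros c hc m. pose proof (Nat.mod_upper_bound m n ltac:(lia)).
    pose proof (hgX c hc (m mod n)%nat ltac:(lia)) as h. rewrite itin_at_lt in h by auto. exact h. }
  assert (hza : seq_zeta ae sx (s0 + n')%nat = seq_zeta ae sx s0).
  { unfold seq_zeta. pose proof (e3 O) as h. pose proof (e5 O) as h'. rewrite !Nat.add_0_r in h, h'. rewrite h, h'. auto. }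
  assert (eb : be (s0 + n')%nat = be s0).
  { apply (step_seq_return be sx); auto.
    - intros m; apply hsl; auto.
    - intros m. destruct (mod_hit n k0 m n0 hk0) as [d hd]. exists d. unfold sx. rewrite hd. auto.
    - intros m. destruct (mod_hit n k1 m n0 hk1) as [d hd]. exists d. unfold sx. rewrite hd. auto.
    - pose proof (seq_zeta_same_sides ae be sx sta stb (fun m => hsl a ha m) (fun m => hsl b hb m) s0 n'). lra. }
  set (b' := fun m => be (s0 + m)%nat).
  pose proof (step_seq_shift _ _ s0 stb) as stb'.
  assert (hb' : in_cyl w n' itin' b').
  { apply (in_cyl_of_step_seq _ _ _ _ stb' n0'); [unfold b'; rewrite Nat.add_0_r; auto|].
    intros m hm. pose proof (e4 m) as h. rewrite Nat.add_0_l, Nat.mod_small in h by auto. exact (eq_sym h). }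
  replace y with (b' (i + (s0 + 1) * n - s0)%nat).
  - exact (cyl_set_of_step_seq _ _ _ _ stb' hb' _).
  - unfold b', be. replace (s0 + (i + (s0 + 1) * n - s0))%nat with (i + (s0 + 1) * n)%nat by nia.
    rewrite Nat.Div0.mod_add, Nat.mod_small; auto.
Qed.

(** * The two classes *)

Section Classes.
Hypothesis hsp : special_width w p q.

Definition extra_cyl n itin : Prop := lam_stable_cyl w n itin /\ ~ ping_pong w n itin.

Lemma extra_cyl_sloped n itin : extra_cyl n itin -> forall B, in_cyl w n itin B -> forall k, (k <= n)%nat -> sloped (dir (itin_at n itin k) (snd (B k))).
Proof.
  intros [hs hnp] B hB k hk. pose proof (lam_stable_slope w p q n itin hw hp hq hsp hs hnp) as hsl.
  assert (gen : forall j, (j < n)%nat -> sloped (dir (itin j) (snd (B j)))).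
  { intros j hj. split. rewrite (hsl B hB j hj). unfold slope, pR, qR. auto.
    apply dir_unit. destruct hB as (_&_&_&h). eapply on_side_lt4; apply h; auto. }
  pose proof (in_cyl_period_pos _ _ _ _ hB) as h0.
  destruct (Nat.eq_dec k n) as [e|e].
  - subst k. rewrite itin_at_n. destruct hB as (_&_&e&_). rewrite e. apply gen; auto.
  - rewrite itin_at_lt by lia. apply gen; lia.
Qed.

Lemma extra_cyl_parities n itin : extra_cyl n itin ->
  (exists k0, (k0 < n)%nat /\ Nat.even (itin k0) = false) /\ (exists k1, (k1 < n)%nat /\ Nat.even (itin k1) = true).
Proof.
  intros [hs hnp]. destruct (non_pingpong_hits_pos w n itin hw (proj1 hs) hnp) as [h1 h2]. split.
  - destruct (count_true_pos _ _ h2) as (k & hk & e). exists k; split; auto. unfold Nat.odd in e. destruct (Nat.even (itin k)); auto.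
  - destruct (count_true_pos _ _ h1) as (k & hk & e). exists k; split; auto.
Qed.

Lemma extra_cyl_share n itin n' itin' : extra_cyl n itin -> extra_cyl n' itin' ->
  (exists x, cyl_set w n itin x /\ cyl_set w n' itin' x) -> forall y, cyl_set w n itin y <-> cyl_set w n' itin' y.
Proof.
  intros h h' [x [hx hx']] y. destruct (extra_cyl_parities _ _ h) as [o e]. destruct (extra_cyl_parities _ _ h') as [o' e'].
  split.
  - apply (cyl_set_share_sub n itin n' itin' x (extra_cyl_sloped _ _ h) o e hx hx').
  - apply (cyl_set_share_sub n' itin' n itin x (extra_cyl_sloped _ _ h') o' e' hx' hx).
Qed.

Definition zeta_class n itin (c : bool) : Prop :=
  exists B, in_cyl w n itin B /\ exists m : Z, gR * IZR m < zeta (apos B O) (adir n itin B O) < gR * (IZR m + 1) /\ Z.even m = c.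

Lemma extra_cyl_zeta_class n itin : extra_cyl n itin -> exists c, zeta_class n itin c.
Proof.
  intros h. pose proof h as [[[B [hB _]] _] _].
  destruct (zeta_in_interval n itin B hB (extra_cyl_sloped _ _ h B hB)) as [m hm].
  exists (Z.even m), B. split; auto. exists m. split; auto.
Qed.

Lemma same_zeta_class_share n itin n' itin' c : extra_cyl n itin -> extra_cyl n' itin' -> zeta_class n itin c -> zeta_class n' itin' c ->
  exists x, cyl_set w n itin x /\ cyl_set w n' itin' x.
Proof.
  intros h h' (A & hA & mA & hmA & eA) (B & hB & mB & hmB & eB).
  pose proof (in_cyl_period_pos _ _ _ _ hB) as n0'.
  exists (B O). split.
  - assert (ev : Z.even (mB - mA) = true) by (rewrite Z.even_sub, eA, eB; destruct c; auto).
    apply Z.even_spec in ev. destruct ev as [d ed].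
    apply (cyl_set_of_zeta_congr n itin A (B O) (itin' O) mA d hA (extra_cyl_sloped _ _ h A hA) hmA).
    + pose proof (orbit_side _ _ _ _ _ hB O ltac:(lia)) as hs. rewrite itin_at_0 in hs; auto.
    + apply (orbit_angle _ _ _ _ hw hB). lia.
    + pose proof (extra_cyl_sloped _ _ h' B hB O ltac:(lia)) as g. rewrite itin_at_0 in g; auto.
    + replace (mA + 2 * d)%Z with mB by lia. unfold apos, adir in hmB. rewrite itin_at_0 in hmB; auto.
  - exists B, O. split; auto.
Qed.

Lemma at_most_two_extra_cylinders : exists A B : R * R -> Prop, forall n itin, lam_stable_cyl w n itin -> ~ ping_pong w n itin ->
    (forall x, cyl_set w n itin x <-> A x) \/ (forall x, cyl_set w n itin x <-> B x).
Proof.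
  set (Af := fun c x => exists n itin, extra_cyl n itin /\ zeta_class n itin c /\ cyl_set w n itin x).
  exists (Af true), (Af false). intros n itin hs hnp.
  assert (h : extra_cyl n itin) by (split; auto).
  destruct (extra_cyl_zeta_class n itin h) as [c hc].
  assert (key : forall x, cyl_set w n itin x <-> Af c x).
  { intros x. split.
    - intros hx. exists n, itin. auto.
    - intros (n' & itin' & h' & hc' & hx). pose proof (same_zeta_class_share _ _ _ _ c h h' hc hc') as hsh.
      apply (extra_cyl_share _ _ _ _ h h' hsh). auto. }
  destruct c; [left|right]; auto.
Qed.

End Classes.

End Invariant.
Theorem proposition4p6 (w : R) (hw : 0 < w) :
  lam_stable_cyl w 2 (fun k => if Nat.even k then 0%nat else 2%nat) /\
  lam_stable_cyl w 2 (fun k => if Nat.even k then 1%nat else 3%nat) /\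
  ((forall p q : nat, (0 < p)%nat -> (0 < q)%nat -> ~ special_width w p q) ->
   forall (n : nat) (itin : nat -> nat),
     lam_stable_cyl w n itin -> ping_pong w n itin) /\
  (forall p q : nat, (0 < p)%nat -> (0 < q)%nat -> special_width w p q ->
   exists A B : R * R -> Prop,
     forall (n : nat) (itin : nat -> nat),
       lam_stable_cyl w n itin -> ~ ping_pong w n itin ->
       ((forall x, cyl_set w n itin x <-> A x) \/
        (forall x, cyl_set w n itin x <-> B x)) /\
       cyl_abs_slope w n itin (INR p / (INR q * w))).
Proof.
  split; [|split; [|split]].
  - apply (lam_stable_pingpong w 0 2 (w/2) (3*w/2+1) 1); simpl; auto; try lra.
    rewrite (bposE w 0 (w/2)), (bposE w 2 (3*w/2+1)) by (simpl; lra). unfold vadd, vscal; simpl; f_equal; lra.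
    unfold vscal; simpl; f_equal; lra.
  - apply (lam_stable_pingpong w 1 3 (w + /2) (2*w+2 - /2) w); simpl; auto; try lra.
    rewrite (bposE w 1 (w + /2)), (bposE w 3 (2*w+2 - /2)) by (simpl; lra). unfold vadd, vscal; simpl; f_equal; lra.
    unfold vscal; simpl; f_equal; lra.
  - intros hns n itin hs. apply NNPP. intros hnp.
    destruct (non_pingpong_hits_pos _ _ _ hw (proj1 hs) hnp) as [h1 h2].
    exact (hns _ _ h1 h2 (lam_stable_special_width _ _ _ hw hs h1 h2)).
  - intros p q hp hq hsp. destruct (at_most_two_extra_cylinders w p q hw hp hq hsp) as (A & B & hAB).
    exists A, B. intros n itin hs hnp. split; [apply hAB; auto|apply lam_stable_slope; auto].
Qed.
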